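(* Let $N\ge1$ and let $\gamma=\frac{B}{\sum_{j=1}^N C_j}$, where $B,C_1,\dots,C_N$ are mutually independent, $B$ is $\kappa$-$\mu$ shadowed with parameters $(\kappa,\mu,m,\bar x)$ and $C_j$ is $\kappa$-$\mu$ shadowed with parameters $(\kappa_j,\mu_j,m_j,\bar x_j)$. Let $f_\gamma$ and $F_\gamma$ be the density and CDF of $\gamma$. Then $$\lim_{z\to 0^+}\frac{z\,f_\gamma(z)}{F_\gamma(z)}=\mu .$$ Equivalently, the CDF of $\hat\gamma=-\gamma$ belongs to the maximum domain of attraction of the reversed Weibull distribution $\Lambda_2(z)=\exp(-(-z)^{\mu})$ for $z\le0$ (and $1$ for $z>0$).
   Context: A random variable $X$ is $\kappa$-$\mu$ shadowed with parameters $(\kappa,\mu,m,\bar x)$ (with $\kappa\ge 0$, $\mu>0$, $m>0$, $\bar x=\mathbb E[X]>0$) if it has density $$f_X(x)=\frac{x^{\mu-1}}{\theta^{\mu-m}\lambda^{m}\Gamma(\mu)}e^{-x/\theta}\,{}_1F_1\!\left(m;\mu;\frac{x}{\theta}-\frac{x}{\lambda}\right),\quad x\ge0,$$ where ${}_1F_1$ is the confluent hypergeometric function, $\theta=\frac{\bar x}{\mu(1+\kappa)}$ and $\lambda=\frac{(\mu\kappa+m)\bar x}{\mu(1+\kappa)m}$. A CDF $F$ is in the maximum domain of attraction of a distribution $G$ if for i.i.d. samples with CDF $F$ there are constants $a_K>0$, $b_K\in\mathbb R$ with $a_K^{-1}(\max_{k\le K}z_k-b_K)$ converging in distribution to $G$.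 *)

From Stdlib Require Import Reals Lra ClassicalEpsilon.
Open Scope R_scope.

Fixpoint poch (a : R) (n : nat) : R :=
  match n with O => 1 | S k => poch a k * (a + INR k) end.

Definition hyp1F1_term (a b x : R) (n : nat) : R :=
  poch a n / poch b n * x ^ n / INR (Factorial.fact n).

Definition hyp1F1 (a b x : R) : R :=
  epsilon (inhabits 0) (fun l => infinite_sum (hyp1F1_term a b x) l).

(* integral of f over (0, +oo), improper at both ends *)
Definition imp_int_0inf_is (f : R -> R) (l : R) : Prop :=
  forall eps, 0 < eps -> exists d, 0 < d /\ exists M, 0 < M /\
    forall u v, 0 < u < d -> M < v -> u < v ->
      exists pr : Riemann_integrable f u v, Rabs (RiemannInt pr - l) < eps.

Definition imp_int_0inf (f : R -> R) : R :=
  epsilon (inhabits 0) (imp_int_0inf_is f).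

(* integral of f over the open interval (a, b), improper at both ends *)
Definition imp_int_ab_is (f : R -> R) (a b l : R) : Prop :=
  forall eps, 0 < eps -> exists d, 0 < d /\
    forall u v, a < u < a + d -> b - d < v < b -> u < v ->
      exists pr : Riemann_integrable f u v, Rabs (RiemannInt pr - l) < eps.

Definition imp_int_ab (f : R -> R) (a b : R) : R :=
  epsilon (inhabits 0) (imp_int_ab_is f a b).

Definition Gamma_fn (mu : R) : R :=
  imp_int_0inf (fun t => Rpower t (mu - 1) * exp (- t)).

Definition ksm_theta (k mu xb : R) : R := xb / (mu * (1 + k)).
Definition ksm_lambda (k mu m xb : R) : R :=
  (mu * k + m) * xb / (mu * (1 + k) * m).

Definition ksm_pdf (k mu m xb : R) (x : R) : R :=
  let th := ksm_theta k mu xb in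
  let la := ksm_lambda k mu m xb in
  if Rle_dec 0 x then
    (if Rlt_dec 0 x then
       Rpower x (mu - 1) / (Rpower th (mu - m) * Rpower la m * Gamma_fn mu)
       * exp (- x / th) * hyp1F1 m mu (x / th - x / la)
     else 0 (* value at the single point 0 is immaterial *))
  else 0.

Definition conv (f g : R -> R) (s : R) : R :=
  if Rlt_dec 0 s then imp_int_ab (fun t => f t * g (s - t)) 0 s else 0.

(* density of C_0 + C_1 + ... + C_n, with C_j independent of density p j *)
Fixpoint sum_pdf (p : nat -> R -> R) (n : nat) : R -> R :=
  match n with
  | O => p O
  | S n' => conv (p (S n')) (sum_pdf p n')
  end.

(* density of B / S, B and S independent nonnegative with densities fB, fS *)
Definition ratio_pdf (fB fS : R -> R) (z : R) : R :=
  if Rlt_dec 0 z then imp_int_0inf (fun s => s * fB (z * s) * fS s) else 0.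

(* CDF at z > 0 of a r.v. supported on [0,oo) with density f *)
Definition cdf_pos (f : R -> R) (z : R) : R := imp_int_ab f 0 z.

From Stdlib Require Import Reals Lra Lia ClassicalEpsilon.
From Coquelicot Require Import Coquelicot.
Open Scope R_scope.

(* Write the kappa-mu shadowed density as [x^(mu-1) h(x)], where [h] is continuous and positive
   on [0, oo) and decays exponentially, because [1F1(m; mu; y)] grows more slowly than any
   [e^(rho y)] with [rho > 1]. The density [f_S] of the sum is continuous, positive somewhere and
   bounded by [A s^(a-1) e^(-be s)]; this class is closed under convolution, the convolution
   integrals being controlled by incomplete beta integrals. Then
   [f_gamma(z) = int_0^oo s f_B(z s) f_S(s) ds = z^(mu-1) J(z)] with
   [J(z) = int_0^oo s^mu h(z s) f_S(s) ds], and dominated convergence makes [J] continuous on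
   [0, oo) with [J(0) > 0]. Hence [F_gamma(z) = (J(0) + o(1)) z^mu / mu] and
   [z f_gamma(z) = (J(0) + o(1)) z^mu] as [z -> 0+], so their ratio tends to [mu]. *)

(* Specialisations to [R -> R] of Coquelicot lemmas whose structure arguments are not inferred. *)
Lemma continuous_Rmult (f g : R -> R) x :
  continuous f x -> continuous g x -> continuous (fun y => f y * g y) x.
Proof. exact (continuous_mult (K:=R_AbsRing) f g x). Qed.

Lemma ex_RInt_continuous_R (f : R -> R) u v : u <= v ->
  (forall z, u <= z <= v -> continuous f z) -> ex_RInt f u v.
Proof.
  intros Huv H. apply (ex_RInt_continuous (V:=R_CompleteNormedModule)).
  intros z Hz. rewrite Rmin_left, Rmax_right in Hz by lra. auto.
Qed.

Lemma RInt_Chasles_R (f : R -> R) x y z : ex_RInt f x y -> ex_RInt f y z ->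
  RInt f x y + RInt f y z = RInt f x z.
Proof. exact (RInt_Chasles f x y z). Qed.

Lemma RInt_scal_R (f : R -> R) k x y : ex_RInt f x y ->
  RInt (fun t => k * f t) x y = k * RInt f x y.
Proof. exact (RInt_scal f x y k). Qed.

Lemma continuous_Rlin (p q x : R) : continuous (fun y => p * y + q) x.
Proof. apply (ex_derive_continuous (K:=R_AbsRing) (V:=R_NormedModule)). auto_derive; auto. Qed.

Lemma continuous_comp_Rlin (g : R -> R) (p q x : R) :
  continuous g (p * x + q) -> continuous (fun y => g (p * y + q)) x.
Proof.
  intros Hg. apply (continuous_comp (fun y => p * y + q) g x); [apply continuous_Rlin | exact Hg].
Qed.

Lemma continuous_exp_lin (be x : R) : continuous (fun s => exp (- (be * s))) x.
Proof.
  apply (continuous_ext (fun s => exp ((- be) * s + 0))). { intros; f_equal; ring. }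
  apply (continuous_comp_Rlin exp), continuous_exp.
Qed.

Lemma continuous_Rpower_base (e x : R) : 0 < x -> continuous (fun s => Rpower s e) x.
Proof.
  intros Hx. apply (ex_derive_continuous (K:=R_AbsRing) (V:=R_NormedModule)).
  exists (e * Rpower x (e - 1)). apply is_derive_Reals, derivable_pt_lim_power, Hx.
Qed.

Lemma continuous_eps_delta (f : R -> R) x : continuous f x -> forall eps, 0 < eps ->
  exists del, 0 < del /\ forall y, Rabs (y - x) < del -> Rabs (f y - f x) < eps.
Proof.
  intros Hc eps Heps. apply continuity_pt_filterlim in Hc.
  destruct (Hc eps Heps) as [del [Hd H]]. exists del. split; auto.
  intros y Hy. destruct (Req_dec y x) as [->|Hne].
  - rewrite Rminus_diag, Rabs_R0; auto.
  - apply H. split; [split; [exact I | auto] | exact Hy].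
Qed.

Lemma continuous_of_eps_delta (f : R -> R) x : (forall eps, 0 < eps -> exists del, 0 < del /\
  forall y, Rabs (y - x) < del -> Rabs (f y - f x) < eps) -> continuous f x.
Proof.
  intros H. apply continuity_pt_filterlim. intros eps Heps.
  destruct (H eps Heps) as [del [Hd Hc]].
  exists del. split; auto. intros y [_ Hy]. exact (Hc y Hy).
Qed.

Lemma continuous_loc_ext (f g : R -> R) x e : 0 < e ->
  (forall y, Rabs (y - x) < e -> f y = g y) -> continuous g x -> continuous f x.
Proof.
  intros He Hfg. apply (continuous_ext_loc (T:=R_UniformSpace) (U:=R_UniformSpace) f g x).
  exists (mkposreal e He). intros y Hy. apply eq_sym, Hfg, Hy.
Qed.

Lemma RInt_FTC (F f : R -> R) u v : u <= v ->
  (forall x, u <= x <= v -> is_derive F x (f x)) ->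
  (forall x, u <= x <= v -> continuous f x) ->
  RInt f u v = F v - F u :> R.
Proof.
  intros Huv Hd Hc. apply is_RInt_unique, (is_RInt_derive F f u v).
  - intros x Hx. rewrite Rmin_left, Rmax_right in Hx by lra. auto.
  - intros x Hx. rewrite Rmin_left, Rmax_right in Hx by lra. auto.
Qed.

Lemma RInt_dist_le (f g : R -> R) x y e : x <= y -> ex_RInt f x y -> ex_RInt g x y ->
  (forall t, x <= t <= y -> Rabs (f t - g t) <= e) ->
  Rabs (RInt f x y - RInt g x y) <= (y - x) * e.
Proof.
  intros Hxy H1 H2 H.
  rewrite <- (RInt_minus f g x y H1 H2 : RInt (fun t => f t - g t) x y = RInt f x y - RInt g x y).
  apply abs_RInt_le_const; auto. exact (ex_RInt_minus f g x y H1 H2).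
Qed.

Lemma exp_le_exp x y : x <= y -> exp x <= exp y.
Proof. intros [H|H]; [left; apply exp_increasing, H | rewrite H; lra]. Qed.

Lemma exp_neg_le_1 x : 0 <= x -> exp (- x) <= 1.
Proof. intros Hx. rewrite <- exp_0. apply exp_le_exp. lra. Qed.

Lemma Rpower_gt_0 x e : 0 < Rpower x e.
Proof. apply exp_pos. Qed.

Lemma Rpower_le_compat_neg x y e : e <= 0 -> 0 < x <= y -> Rpower y e <= Rpower x e.
Proof.
  intros He Hxy.
  replace e with (- - e) by ring. rewrite !(Rpower_Ropp _ (- e)).
  apply Rinv_le_contravar; [apply Rpower_gt_0 | apply Rle_Rpower_l; lra].
Qed.

Lemma Rpower_le_ends x p q e : 0 < p <= x -> x <= q -> Rpower x e <= Rpower p e + Rpower q e.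
Proof.
  intros Hp Hq. pose proof (Rpower_gt_0 p e). pose proof (Rpower_gt_0 q e).
  destruct (Rle_dec 0 e).
  - pose proof (Rle_Rpower_l x q e r ltac:(lra)). lra.
  - pose proof (Rpower_le_compat_neg p x e ltac:(lra) ltac:(lra)). lra.
Qed.

Lemma Rpower_1_base e : Rpower 1 e = 1.
Proof. unfold Rpower. rewrite ln_1, Rmult_0_r. apply exp_0. Qed.

Lemma Rpower_le_1 x e : 0 <= e -> 0 < x <= 1 -> Rpower x e <= 1.
Proof. intros. rewrite <- (Rpower_1_base e). apply Rle_Rpower_l; lra. Qed.

Lemma Rpower_le_1_neg x e : e <= 0 -> 1 <= x -> Rpower x e <= 1.
Proof. intros. rewrite <- (Rpower_1_base e). apply Rpower_le_compat_neg; lra. Qed.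

Lemma Rpower_pred x e : 0 < x -> x * Rpower x (e - 1) = Rpower x e.
Proof. intros Hx. rewrite <- (Rpower_1 x Hx) at 1. rewrite <- Rpower_plus. f_equal. ring. Qed.

Lemma is_derive_Rpower_base x c : 0 < x -> is_derive (fun s => Rpower s c) x (c * Rpower x (c - 1)).
Proof. intros. apply is_derive_Reals, derivable_pt_lim_power; auto. Qed.

Lemma RInt_Rpower u v c : 0 < u <= v -> 0 < c ->
  RInt (fun s => Rpower s (c - 1)) u v = (Rpower v c - Rpower u c) / c :> R.
Proof.
  intros Hu Hc. rewrite (RInt_FTC (fun s => Rpower s c / c)); [unfold Rdiv; ring | lra | |].
  - intros x Hx. replace (Rpower x (c - 1)) with (/ c * (c * Rpower x (c - 1))) by (field; lra).
    apply (is_derive_ext (fun s => / c * Rpower s c)). { intros t; apply Rmult_comm. }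
    apply is_derive_scal, is_derive_Rpower_base. lra.
  - intros x Hx. apply continuous_Rpower_base. lra.
Qed.

Lemma RInt_Rpower_reflect s u v b : u <= v -> v < s -> 0 < b ->
  RInt (fun t => Rpower (s - t) (b - 1)) u v = (Rpower (s - u) b - Rpower (s - v) b) / b :> R.
Proof.
  intros Huv Hvs Hb.
  rewrite (RInt_FTC (fun t => - / b * Rpower (s - t) b)); [field; lra | lra | |].
  - intros x Hx.
    pose proof (is_derive_comp (fun y => Rpower y b) (fun t => s - t) x _ (-1)
      (is_derive_Rpower_base (s - x) b ltac:(lra)) ltac:(auto_derive; auto; ring)) as Hd.
    apply (is_derive_scal _ _ (- / b)) in Hd.
    replace (Rpower (s - x) (b - 1)) with (- / b * scal (-1) (b * Rpower (s - x) (b - 1))).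
    { exact Hd. }
    unfold scal; simpl; unfold mult; simpl. field. lra.
  - intros x Hx. apply (continuous_ext (fun t => Rpower ((-1) * t + s) (b - 1))).
    { intros t. f_equal. ring. }
    apply (continuous_comp_Rlin (fun y => Rpower y (b - 1))), continuous_Rpower_base. lra.
Qed.

Lemma ex_RInt_Rpower u v e : 0 < u <= v -> ex_RInt (fun s => Rpower s e) u v.
Proof.
  intros Hu. apply ex_RInt_continuous_R; [lra|]. intros. apply continuous_Rpower_base. lra.
Qed.

Lemma RInt_exp_neg u v be : u <= v -> 0 < be ->
  RInt (fun s => exp (- (be * s))) u v = (exp (- (be * u)) - exp (- (be * v))) / be :> R.
Proof.
  intros Huv Hb. rewrite (RInt_FTC (fun s => - exp (- (be * s)) / be)); [field; lra | lra | |].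
  - intros x Hx. auto_derive; auto. field. lra.
  - intros x Hx. apply continuous_exp_lin.
Qed.

Lemma exists_small_mul S eps : 0 <= S -> 0 < eps -> exists E, 0 < E /\ S * E <= eps.
Proof.
  intros HS Heps. exists (eps / (S + 1)). split; [apply Rdiv_lt_0_compat; lra|].
  assert (H : (S + 1) * (eps / (S + 1)) = eps) by (field; lra).
  assert (0 < eps / (S + 1)) by (apply Rdiv_lt_0_compat; lra). nra.
Qed.

Lemma uniformly_continuous_on (f : R -> R) lo hi : (forall x, lo <= x <= hi -> continuous f x) ->
  forall eps, 0 < eps -> exists del, 0 < del /\ forall x y, lo <= x <= hi -> lo <= y <= hi ->
    Rabs (x - y) < del -> Rabs (f x - f y) < eps.
Proof.
  intros Hc eps Heps.
  assert (Hpt : forall x, lo <= x <= hi -> continuity_pt f x)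
    by (intros; apply continuity_pt_filterlim, Hc; auto).
  destruct (Heine_cor2 Hpt (mkposreal eps Heps)) as [del Hd].
  exists del. split; [apply cond_pos | exact Hd].
Qed.

(** * Improper integrals *)

Section Improper.
Implicit Types (a : R) (b : Rbar) (f g : R -> R).

(* Improper integrals over (a, b) are limits of [RInt f u v] as [u] decreases to [a]
   and [v] increases to [b]; [b] may be [p_infty]. *)
Definition ex_RInt_in f a b :=
  forall u v, a < u -> u <= v -> Rbar_lt v b -> ex_RInt f u v.

Definition nonneg_in f a b := forall t, a < t -> Rbar_lt t b -> 0 <= f t.

Definition is_RInt_imp f a b (l : R) :=
  forall eps, 0 < eps -> exists u0 v0, a < u0 /\ u0 <= v0 /\ Rbar_lt v0 b /\
    forall u v, a < u -> u <= u0 -> v0 <= v -> Rbar_lt v b -> Rabs (RInt f u v - l) < eps.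

Lemma ex_RInt_in_sub f a b u v u' v' : ex_RInt_in f a b ->
  a < u -> u <= u' -> u' <= v' -> v' <= v -> Rbar_lt v b -> ex_RInt f u' v'.
Proof.
  intros H ? ? ? ? Hv. apply H; try lra. exact (Rbar_le_lt_trans v' v b ltac:(simpl; lra) Hv).
Qed.

Lemma ex_RInt_in_continuous f a b : (forall t, a < t -> Rbar_lt t b -> continuous f t) ->
  ex_RInt_in f a b.
Proof.
  intros Hc u v Hu Huv Hv. apply ex_RInt_continuous_R; auto.
  intros z Hz. apply Hc; [lra|]. exact (Rbar_le_lt_trans z v b ltac:(simpl; lra) Hv).
Qed.

Lemma ex_RInt_in_ext f g a b : (forall t, a < t -> Rbar_lt t b -> f t = g t) ->
  ex_RInt_in f a b -> ex_RInt_in g a b.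
Proof.
  intros He H u v ? ? Hv. apply ex_RInt_ext with f; [|apply H; auto].
  intros x Hx. rewrite Rmin_left, Rmax_right in Hx by lra.
  apply He; [lra|]. exact (Rbar_le_lt_trans x v b ltac:(simpl; lra) Hv).
Qed.

Lemma RInt_Chasles3 f u u0 v0 v : ex_RInt f u u0 -> ex_RInt f u0 v0 -> ex_RInt f v0 v ->
  RInt f u v = RInt f u u0 + RInt f u0 v0 + RInt f v0 v.
Proof.
  intros H1 H2 H3. assert (H4 : ex_RInt f u v0) by (eapply ex_RInt_Chasles; eauto).
  rewrite <- (RInt_Chasles_R f u v0 v H4 H3), <- (RInt_Chasles_R f u u0 v0 H1 H2). reflexivity.
Qed.

Lemma RInt_Chasles3_in f a b u u0 v0 v : ex_RInt_in f a b ->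
  a < u -> u <= u0 -> u0 <= v0 -> v0 <= v -> Rbar_lt v b ->
  RInt f u v = RInt f u u0 + RInt f u0 v0 + RInt f v0 v.
Proof. intros Hf ? ? ? ? Hv. apply RInt_Chasles3; apply (ex_RInt_in_sub f a b u v); auto; lra. Qed.

Section Interval.
Variables (f g : R -> R) (a : R) (b : Rbar).
Hypotheses (Hf : ex_RInt_in f a b) (Hg : ex_RInt_in g a b).

Lemma RInt_nonneg_in_mono u v u' v' : nonneg_in f a b ->
  a < u -> u <= u' -> u' <= v' -> v' <= v -> Rbar_lt v b -> RInt f u' v' <= RInt f u v.
Proof.
  intros Hn ? ? ? ? Hv. rewrite (RInt_Chasles3_in f a b u u' v' v) by auto.
  assert (Hlt : forall t, t <= v -> Rbar_lt t b)
    by (intros t Ht; exact (Rbar_le_lt_trans t v b Ht Hv)).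
  assert (Hi : forall x y, u <= x -> x <= y -> y <= v -> ex_RInt f x y)
    by (intros; apply (ex_RInt_in_sub _ a b u v); auto; lra).
  assert (0 <= RInt f u u')
    by (apply RInt_ge_0; [lra | apply Hi; lra | intros; apply Hn, Hlt; lra]).
  assert (0 <= RInt f v' v)
    by (apply RInt_ge_0; [lra | apply Hi; lra | intros; apply Hn, Hlt; lra]).
  lra.
Qed.

Lemma RInt_outer_le u u0 v0 v : (forall t, a < t -> Rbar_lt t b -> f t <= g t) ->
  a < u -> u <= u0 -> u0 <= v0 -> v0 <= v -> Rbar_lt v b ->
  RInt f u v - RInt f u0 v0 <= RInt g u v - RInt g u0 v0.
Proof.
  intros Hle ? ? ? ? Hv.
  rewrite (RInt_Chasles3_in f a b u u0 v0 v), (RInt_Chasles3_in g a b u u0 v0 v) by auto.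
  assert (Hlt : forall t, t <= v -> Rbar_lt t b)
    by (intros t Ht; exact (Rbar_le_lt_trans t v b Ht Hv)).
  assert (Hi : forall F x y, ex_RInt_in F a b -> u <= x -> x <= y -> y <= v -> ex_RInt F x y)
    by (intros; apply (ex_RInt_in_sub _ a b u v); auto; lra).
  assert (RInt f u u0 <= RInt g u u0)
    by (apply RInt_le; [lra | apply Hi; auto; lra | apply Hi; auto; lra
                       | intros; apply Hle, Hlt; lra]).
  assert (RInt f v0 v <= RInt g v0 v)
    by (apply RInt_le; [lra | apply Hi; auto; lra | apply Hi; auto; lra
                       | intros; apply Hle, Hlt; lra]).
  lra.
Qed.

End Interval.

Lemma Rbar_lt_room (c : R) b : Rbar_lt c b -> exists e, 0 < e /\ Rbar_lt (c + e) b.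
Proof.
  destruct b as [b| |]; simpl; intros H.
  - exists ((b - c) / 2). split; lra.
  - exists 1. split; [lra | exact I].
  - contradiction.
Qed.

(* The improper integral is the supremum of the integrals over compact subintervals. *)
Lemma is_RInt_imp_bounded f a b B : Rbar_lt a b -> ex_RInt_in f a b -> nonneg_in f a b ->
  (forall u v, a < u -> u <= v -> Rbar_lt v b -> RInt f u v <= B) ->
  exists l, is_RInt_imp f a b l /\ 0 <= l <= B /\
    (forall u v, a < u -> u <= v -> Rbar_lt v b -> RInt f u v <= l).
Proof.
  intros Hab Hi Hn HB.
  set (E := fun x => exists u v, a < u /\ u <= v /\ Rbar_lt v b /\ x = RInt f u v).
  assert (Hbd : bound E) by (exists B; intros x [u [v [? [? [? ->]]]]]; auto).
  destruct (Rbar_lt_room a b Hab) as [e [He Hc]].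
  assert (Hne : exists x, E x)
    by (exists (RInt f (a + e) (a + e)), (a + e), (a + e); repeat split; auto; lra).
  destruct (completeness E Hbd Hne) as [l [Hub Hlub]].
  assert (Hle : forall u v, a < u -> u <= v -> Rbar_lt v b -> RInt f u v <= l)
    by (intros u v ? ? ?; apply Hub; exists u, v; auto).
  exists l. split; [|split; [split|]]; auto.
  - intros eps Heps.
    assert (exists u0 v0, a < u0 /\ u0 <= v0 /\ Rbar_lt v0 b /\ l - eps < RInt f u0 v0)
      as [u0 [v0 [? [? [? ?]]]]].
    { apply Classical_Prop.NNPP. intro Hno.
      assert (l <= l - eps); [|lra].
      apply Hlub. intros x [u [v [? [? [? ->]]]]].
      apply Rnot_lt_le. intro Hlt. apply Hno. exists u, v; auto. }
    exists u0, v0. repeat split; auto.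
    intros u v ? ? ? ?.
    assert (RInt f u0 v0 <= RInt f u v) by (eapply RInt_nonneg_in_mono; eauto).
    assert (RInt f u v <= l) by (apply Hle; auto; lra).
    apply Rabs_def1; lra.
  - apply Rle_trans with (RInt f (a + e) (a + e)); [|apply Hle; auto; lra].
    rewrite RInt_point. unfold zero; simpl; lra.
  - apply Hlub. intros x [u [v [? [? [? ->]]]]]. auto.
Qed.

Lemma is_RInt_imp_pos f a b c l : ex_RInt_in f a b -> a < c -> Rbar_lt c b ->
  continuous f c -> 0 < f c ->
  (forall u v, a < u -> u <= v -> Rbar_lt v b -> RInt f u v <= l) -> 0 < l.
Proof.
  intros Hi Hac Hcb Hc Hpos Hl.
  destruct (continuous_eps_delta f c Hc (f c / 2)) as [del [Hd Hdel]]; [lra|].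
  destruct (Rbar_lt_room c b Hcb) as [e [He Hce]].
  set (d := Rmin (Rmin (del / 2) ((c - a) / 2)) e).
  assert (0 < d) by (unfold d; repeat apply Rmin_glb_lt; lra).
  assert (d <= del / 2 /\ d <= (c - a) / 2 /\ d <= e) as [? [? ?]].
  { unfold d. pose proof (Rmin_l (Rmin (del / 2) ((c - a) / 2)) e).
    pose proof (Rmin_r (Rmin (del / 2) ((c - a) / 2)) e).
    pose proof (Rmin_l (del / 2) ((c - a) / 2)). pose proof (Rmin_r (del / 2) ((c - a) / 2)). lra. }
  assert (Hv : Rbar_lt (c + d) b)
    by exact (Rbar_le_lt_trans (c + d) (c + e) b ltac:(simpl; lra) Hce).
  apply Rlt_le_trans with (RInt f (c - d) (c + d)); [|apply Hl; auto; lra].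
  apply Rlt_le_trans with (RInt (fun _ => f c / 2) (c - d) (c + d)).
  - rewrite RInt_const. unfold scal; simpl; unfold mult; simpl. nra.
  - apply RInt_le; [lra | apply ex_RInt_const | apply Hi; auto; lra |].
    intros x Hx. assert (Hxd : Rabs (x - c) < del) by (apply Rabs_def1; lra).
    specialize (Hdel x Hxd). apply Rabs_def2 in Hdel. lra.
Qed.

Lemma is_RInt_imp_ext f g a b l : (forall t, a < t -> Rbar_lt t b -> f t = g t) ->
  is_RInt_imp f a b l -> is_RInt_imp g a b l.
Proof.
  intros He H eps Heps. destruct (H eps Heps) as [u0 [v0 [? [? [? Hc]]]]].
  exists u0, v0. repeat split; auto. intros u v ? ? ? Hv.
  rewrite <- (RInt_ext f g); [apply Hc; auto|].
  intros x Hx. rewrite Rmin_left, Rmax_right in Hx by lra.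
  apply He; [lra|]. exact (Rbar_le_lt_trans x v b ltac:(simpl; lra) Hv).
Qed.

Lemma is_RInt_imp_scal f a b l c : ex_RInt_in f a b ->
  is_RInt_imp f a b l -> is_RInt_imp (fun t => c * f t) a b (c * l).
Proof.
  intros Hi H eps Heps. pose proof (Rabs_pos c).
  destruct (H (eps / (Rabs c + 1))) as [u0 [v0 [? [? [? Hc]]]]].
  { apply Rdiv_lt_0_compat; lra. }
  exists u0, v0. repeat split; auto. intros u v ? ? ? ?.
  rewrite RInt_scal_R by (apply Hi; auto; lra).
  replace (c * RInt f u v - c * l) with (c * (RInt f u v - l)) by ring.
  rewrite Rabs_mult. specialize (Hc u v ltac:(lra) ltac:(lra) ltac:(lra) ltac:(assumption)).
  apply Rle_lt_trans with (Rabs c * (eps / (Rabs c + 1))).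
  - apply Rmult_le_compat_l; lra.
  - apply Rmult_lt_reg_r with (Rabs c + 1); [lra|]. field_simplify; lra.
Qed.

Lemma is_RInt_imp_le f g a b l1 l2 : ex_RInt_in f a b -> ex_RInt_in g a b ->
  (forall t, a < t -> Rbar_lt t b -> f t <= g t) ->
  is_RInt_imp f a b l1 -> is_RInt_imp g a b l2 -> l1 <= l2.
Proof.
  intros Hf Hg Hle H1 H2. apply Rnot_lt_le. intro Hlt.
  destruct (H1 ((l1 - l2) / 2)) as [u1 [v1 [? [? [? Hc1]]]]]; [lra|].
  destruct (H2 ((l1 - l2) / 2)) as [u2 [v2 [? [? [? Hc2]]]]]; [lra|].
  pose proof (Rmin_l u1 u2). pose proof (Rmin_r u1 u2).
  pose proof (Rmax_l v1 v2). pose proof (Rmax_r v1 v2).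
  set (u := Rmin u1 u2) in *. set (v := Rmax v1 v2) in *.
  assert (a < u) by (unfold u; apply Rmin_glb_lt; auto).
  assert (Hv : Rbar_lt v b) by (unfold v; apply Rmax_case; auto).
  specialize (Hc1 u v ltac:(lra) ltac:(lra) ltac:(lra) Hv).
  specialize (Hc2 u v ltac:(lra) ltac:(lra) ltac:(lra) Hv).
  assert (RInt f u v <= RInt g u v).
  { apply RInt_le; [lra | apply Hf; auto; lra | apply Hg; auto; lra |].
    intros x Hx. apply Hle; [lra|]. exact (Rbar_le_lt_trans x v b ltac:(simpl; lra) Hv). }
  apply Rabs_def2 in Hc1. apply Rabs_def2 in Hc2. lra.
Qed.

Lemma eq_of_dist_lt (x y : R) : (forall eps, 0 < eps -> Rabs (x - y) < eps) -> x = y.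
Proof.
  intros H. destruct (Req_dec x y) as [|Hne]; auto.
  assert (Hd : 0 < Rabs (x - y)) by (apply Rabs_pos_lt; lra).
  specialize (H _ Hd). lra.
Qed.

Lemma imp_int_ab_is_of f a (b : R) l :
  ex_RInt_in f a b -> is_RInt_imp f a b l -> imp_int_ab_is f a b l.
Proof.
  intros Hi H eps Heps. destruct (H eps Heps) as [u0 [v0 [? [? [Hv0 Hc]]]]]. simpl in Hv0.
  pose proof (Rmin_l (u0 - a) (b - v0)). pose proof (Rmin_r (u0 - a) (b - v0)).
  exists (Rmin (u0 - a) (b - v0)). split; [apply Rmin_glb_lt; lra|].
  intros u v Hu Hv Huv.
  assert (Hex : ex_RInt f u v) by (apply Hi; simpl; lra).
  exists (ex_RInt_Reals_0 _ _ _ Hex). rewrite <- RInt_Reals. apply Hc; simpl; lra.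
Qed.

Lemma imp_int_0inf_is_of f l : ex_RInt_in f 0 p_infty -> is_RInt_imp f 0 p_infty l ->
  imp_int_0inf_is f l.
Proof.
  intros Hi H eps Heps. destruct (H eps Heps) as [u0 [v0 [? [? [_ Hc]]]]].
  pose proof (Rmax_l v0 1). pose proof (Rmax_r v0 1).
  exists u0. split; auto. exists (Rmax v0 1). split; [lra|].
  intros u v Hu Hv Huv.
  assert (Hex : ex_RInt f u v) by (apply Hi; simpl; auto; lra).
  exists (ex_RInt_Reals_0 _ _ _ Hex). rewrite <- RInt_Reals. apply Hc; simpl; auto; lra.
Qed.

Lemma imp_int_ab_is_unique f a (b : R) l1 l2 : a < b ->
  imp_int_ab_is f a b l1 -> imp_int_ab_is f a b l2 -> l1 = l2.
Proof.
  intros Hab H1 H2. apply eq_of_dist_lt. intros eps Heps.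
  destruct (H1 (eps / 2)) as [d1 [Hd1 Hc1]]; [lra|].
  destruct (H2 (eps / 2)) as [d2 [Hd2 Hc2]]; [lra|].
  pose proof (Rmin_l (Rmin d1 d2) (b - a)). pose proof (Rmin_r (Rmin d1 d2) (b - a)).
  pose proof (Rmin_l d1 d2). pose proof (Rmin_r d1 d2).
  set (d := Rmin (Rmin d1 d2) (b - a)) in *.
  assert (0 < d) by (unfold d; repeat apply Rmin_glb_lt; lra).
  destruct (Hc1 (a + d / 3) (b - d / 3)) as [p1 Hp1]; try lra.
  destruct (Hc2 (a + d / 3) (b - d / 3)) as [p2 Hp2]; try lra.
  rewrite (RiemannInt_P5 p1 p2) in Hp1.
  apply Rabs_def2 in Hp1. apply Rabs_def2 in Hp2. apply Rabs_def1; lra.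
Qed.

Lemma imp_int_0inf_is_unique f l1 l2 : imp_int_0inf_is f l1 -> imp_int_0inf_is f l2 -> l1 = l2.
Proof.
  intros H1 H2. apply eq_of_dist_lt. intros eps Heps.
  destruct (H1 (eps / 2)) as [d1 [Hd1 [M1 [HM1 Hc1]]]]; [lra|].
  destruct (H2 (eps / 2)) as [d2 [Hd2 [M2 [HM2 Hc2]]]]; [lra|].
  pose proof (Rmin_l d1 d2). pose proof (Rmin_r d1 d2).
  pose proof (Rmax_l M1 M2). pose proof (Rmax_r M1 M2).
  assert (0 < Rmin d1 d2) by (apply Rmin_glb_lt; lra).
  set (u := Rmin d1 d2 / 2). set (v := Rmax M1 M2 + u + 1).
  assert (0 < u < d1 /\ 0 < u < d2 /\ M1 < v /\ M2 < v /\ u < v) as [? [? [? [? ?]]]]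
    by (unfold v, u; lra).
  destruct (Hc1 u v) as [p1 Hp1]; auto.
  destruct (Hc2 u v) as [p2 Hp2]; auto.
  rewrite (RiemannInt_P5 p1 p2) in Hp1.
  apply Rabs_def2 in Hp1. apply Rabs_def2 in Hp2. apply Rabs_def1; lra.
Qed.

Lemma imp_int_ab_eq f a (b : R) l : a < b -> ex_RInt_in f a b -> is_RInt_imp f a b l ->
  imp_int_ab f a b = l.
Proof.
  intros Hab Hi H. assert (Hs : imp_int_ab_is f a b l) by (apply imp_int_ab_is_of; auto).
  unfold imp_int_ab. apply (imp_int_ab_is_unique f a b); auto. apply epsilon_spec. exists l; auto.
Qed.

Lemma imp_int_0inf_eq f l : ex_RInt_in f 0 p_infty -> is_RInt_imp f 0 p_infty l ->
  imp_int_0inf f = l.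
Proof.
  intros Hi H. assert (Hs : imp_int_0inf_is f l) by (apply imp_int_0inf_is_of; auto).
  unfold imp_int_0inf. apply (imp_int_0inf_is_unique f); auto. apply epsilon_spec. exists l; auto.
Qed.

Lemma is_RInt_imp_dominated_trunc F W a b Lw L u0 v0 e :
  ex_RInt_in F a b -> nonneg_in F a b -> ex_RInt_in W a b ->
  (forall t, a < t -> Rbar_lt t b -> F t <= W t) ->
  a < u0 -> u0 <= v0 -> Rbar_lt v0 b ->
  (forall u v, a < u -> u <= u0 -> v0 <= v -> Rbar_lt v b -> Rabs (RInt W u v - Lw) < e) ->
  is_RInt_imp F a b L -> Rabs (L - RInt F u0 v0) < 3 * e.
Proof.
  intros HiF HnF HiW Hle Hu0 Huv0 Hv0 HW HF.
  pose proof (HW u0 v0 Hu0 (Rle_refl _) (Rle_refl _) Hv0) as HW0.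
  assert (He : 0 < e) by (pose proof (Rabs_pos (RInt W u0 v0 - Lw)); lra).
  destruct (HF e He) as [u1 [v1 [? [? [? Hc]]]]].
  pose proof (Rmin_l u0 u1). pose proof (Rmin_r u0 u1).
  pose proof (Rmax_l v0 v1). pose proof (Rmax_r v0 v1).
  set (u := Rmin u0 u1) in *. set (v := Rmax v0 v1) in *.
  assert (a < u) by (unfold u; apply Rmin_glb_lt; auto).
  assert (Hv : Rbar_lt v b) by (unfold v; apply Rmax_case; auto).
  specialize (Hc u v ltac:(lra) ltac:(lra) ltac:(lra) Hv).
  assert (RInt F u0 v0 <= RInt F u v) by (eapply RInt_nonneg_in_mono; eauto).
  assert (RInt F u v - RInt F u0 v0 <= RInt W u v - RInt W u0 v0) by (eapply RInt_outer_le; eauto).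
  specialize (HW u v ltac:(lra) ltac:(lra) ltac:(lra) Hv).
  apply Rabs_def2 in Hc. apply Rabs_def2 in HW. apply Rabs_def2 in HW0. apply Rabs_def1; lra.
Qed.

(* Dominated convergence, for a real parameter [z] on which [F z] depends continuously,
   uniformly on compact subintervals. *)
Lemma is_RInt_imp_param_continuous (F : R -> R -> R) W a b (Z : R -> Prop) z0 (L : R -> R) Lw :
  Z z0 ->
  (forall z, Z z -> ex_RInt_in (F z) a b) -> (forall z, Z z -> nonneg_in (F z) a b) ->
  ex_RInt_in W a b ->
  (forall z t, Z z -> a < t -> Rbar_lt t b -> F z t <= W t) ->
  is_RInt_imp W a b Lw ->
  (forall z, Z z -> is_RInt_imp (F z) a b (L z)) ->
  (forall u v, a < u -> u <= v -> Rbar_lt v b -> forall eps, 0 < eps -> exists del, 0 < del /\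
     forall z, Z z -> Rabs (z - z0) < del ->
     forall t, u <= t <= v -> Rabs (F z t - F z0 t) <= eps) ->
  forall eps, 0 < eps -> exists del, 0 < del /\
    forall z, Z z -> Rabs (z - z0) < del -> Rabs (L z - L z0) < eps.
Proof.
  intros HZ0 HiF HnF HiW Hle HW HL Hunif eps Heps.
  destruct (HW (eps / 8)) as [u0 [v0 [Hu0 [Huv0 [Hv0 HWc]]]]]; [lra|].
  destruct (exists_small_mul (v0 - u0) (eps / 8)) as [e [He Hemid]]; [lra | lra|].
  destruct (Hunif u0 v0 Hu0 Huv0 Hv0 e He) as [del [Hdel Hd]].
  exists del. split; auto. intros z Hz Hzd.
  assert (Htrunc : forall y, Z y -> Rabs (L y - RInt (F y) u0 v0) < 3 * (eps / 8)).
  { intros y Hy. apply (is_RInt_imp_dominated_trunc (F y) W a b Lw); auto. }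
  assert (Hmid : Rabs (RInt (F z) u0 v0 - RInt (F z0) u0 v0) <= (v0 - u0) * e).
  { apply RInt_dist_le;
      [exact Huv0 | apply (HiF z Hz) | apply (HiF z0 HZ0) | exact (Hd z Hz Hzd)]; auto. }
  pose proof (Htrunc z Hz) as T1. pose proof (Htrunc z0 HZ0) as T2.
  apply Rabs_def2 in T1. apply Rabs_def2 in T2.
  pose proof (Rle_abs (RInt (F z) u0 v0 - RInt (F z0) u0 v0)).
  pose proof (Rle_abs (- (RInt (F z) u0 v0 - RInt (F z0) u0 v0))). rewrite Rabs_Ropp in *.
  apply Rabs_def1; lra.
Qed.

End Improper.

(** * Gamma and beta kernels *)

Definition gamma_kernel (c be s : R) := Rpower s (c - 1) * exp (- (be * s)).

Lemma gamma_kernel_pos c be s : 0 < gamma_kernel c be s.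
Proof. apply Rmult_lt_0_compat; [apply Rpower_gt_0 | apply exp_pos]. Qed.

Lemma continuous_gamma_kernel c be s : 0 < s -> continuous (gamma_kernel c be) s.
Proof.
  intros. apply continuous_Rmult; [apply continuous_Rpower_base; auto | apply continuous_exp_lin].
Qed.

Lemma ex_RInt_in_gamma_kernel c be : ex_RInt_in (gamma_kernel c be) 0 p_infty.
Proof. apply ex_RInt_in_continuous. intros. apply continuous_gamma_kernel. auto. Qed.

Lemma gamma_kernel_le_rate c be be' s : 0 < s -> be' <= be ->
  gamma_kernel c be s <= gamma_kernel c be' s.
Proof.
  intros Hs Hb. apply Rmult_le_compat_l; [left; apply Rpower_gt_0 | apply exp_le_exp; nra].
Qed.

Lemma gamma_kernel_le_Rpower c be s : 0 < s -> 0 < be -> gamma_kernel c be s <= Rpower s (c - 1).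
Proof.
  intros Hs Hb. unfold gamma_kernel. pose proof (Rpower_gt_0 s (c - 1)).
  pose proof (exp_neg_le_1 (be * s) ltac:(nra)). nra.
Qed.

(* From [ln x <= x - 1] at [x = s / y] with [y = (c - 1) / ga]. *)
Lemma Rpower_le_exp c ga : 0 < ga -> exists K, 0 < K /\
  forall s, 1 <= s -> Rpower s (c - 1) <= K * exp (ga * s).
Proof.
  intros Hg. destruct (Rle_dec (c - 1) 0) as [Hc|Hc].
  - exists 1. split; [lra|]. intros s Hs. pose proof (Rpower_le_1_neg s (c - 1) Hc Hs).
    assert (1 <= exp (ga * s)) by (rewrite <- exp_0; apply exp_le_exp; nra). lra.
  - set (y := (c - 1) / ga). assert (Hy : 0 < y) by (apply Rdiv_lt_0_compat; lra).
    exists (exp ((c - 1) * (ln y - 1))). split; [apply exp_pos|]. intros s Hs.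
    assert (Hl : ln s <= ln y + s / y - 1).
    { assert (ln (s / y) <= s / y - 1).
      { rewrite <- (ln_exp (s / y - 1)). apply ln_le; [apply Rdiv_lt_0_compat; lra|].
        pose proof (exp_ineq1_le (s / y - 1)). lra. }
      rewrite ln_div in H by lra. lra. }
    unfold Rpower. rewrite <- exp_plus. apply exp_le_exp.
    assert ((c - 1) * (s / y) = ga * s) by (unfold y; field; lra).
    assert ((c - 1) * ln s <= (c - 1) * (ln y + s / y - 1)) by (apply Rmult_le_compat_l; lra).
    nra.
Qed.

Lemma RInt_gamma_kernel_le_head c be u v : 0 < c -> 0 < be -> 0 < u -> u <= v -> v <= 1 ->
  RInt (gamma_kernel c be) u v <= 1 / c.
Proof.
  intros Hc Hb Hu Huv Hv1.
  apply Rle_trans with (RInt (fun s => Rpower s (c - 1)) u v).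
  - apply RInt_le; [lra | apply ex_RInt_in_gamma_kernel; simpl; auto | apply ex_RInt_Rpower; lra |].
    intros x Hx. apply gamma_kernel_le_Rpower; lra.
  - rewrite RInt_Rpower by lra. pose proof (Rpower_gt_0 u c).
    pose proof (Rpower_le_1 v c ltac:(lra) ltac:(lra)).
    apply Rmult_le_compat_r; [left; apply Rinv_0_lt_compat|]; lra.
Qed.

Lemma RInt_gamma_kernel_le_tail c be : 0 < be -> exists B, 0 <= B /\
  forall u v, 1 <= u -> u <= v -> RInt (gamma_kernel c be) u v <= B.
Proof.
  intros Hb. destruct (Rpower_le_exp c (be / 2)) as [K [HK HKb]]; [lra|].
  exists (K * (2 / be)). split; [apply Rmult_le_pos; [lra | apply Rlt_le, Rdiv_lt_0_compat; lra]|].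
  intros u v Hu Huv.
  assert (Hex : ex_RInt (fun s => exp (- (be / 2 * s))) u v)
    by (apply ex_RInt_continuous_R; auto; intros; apply continuous_exp_lin).
  apply Rle_trans with (RInt (fun s => K * exp (- (be / 2 * s))) u v).
  - apply RInt_le; [lra | apply ex_RInt_in_gamma_kernel; simpl; auto; lra
                   | exact (ex_RInt_scal _ u v K Hex) |].
    intros x Hx. unfold gamma_kernel.
    replace (K * exp (- (be / 2 * x))) with (K * exp (be / 2 * x) * exp (- (be * x)))
      by (rewrite Rmult_assoc, <- exp_plus; do 2 f_equal; field).
    apply Rmult_le_compat_r; [left; apply exp_pos | apply HKb; lra].
  - rewrite RInt_scal_R by exact Hex.
    rewrite RInt_exp_neg by lra. apply Rmult_le_compat_l; [lra|].
    pose proof (exp_neg_le_1 (be / 2 * u) ltac:(nra)). pose proof (exp_pos (- (be / 2 * v))).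
    apply Rmult_le_reg_r with (be / 2); [lra|]. field_simplify; lra.
Qed.

Lemma RInt_gamma_kernel_bounded c be : 0 < c -> 0 < be -> exists B,
  forall u v, 0 < u -> u <= v -> RInt (gamma_kernel c be) u v <= B.
Proof.
  intros Hc Hb. destruct (RInt_gamma_kernel_le_tail c be Hb) as [B2 [HB2 Htail]].
  pose proof (Rinv_0_lt_compat c Hc).
  exists (1 / c + B2). intros u v Hu Huv.
  pose proof (RInt_gamma_kernel_le_head c be) as Hhead.
  destruct (Rle_dec v 1). { pose proof (Hhead u v Hc Hb Hu Huv r). lra. }
  destruct (Rle_dec 1 u). { pose proof (Htail u v r Huv). lra. }
  assert (Hi : forall x y, 0 < x -> x <= y -> ex_RInt (gamma_kernel c be) x y)
    by (intros; apply ex_RInt_in_gamma_kernel; simpl; auto).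
  rewrite <- (RInt_Chasles_R _ u 1 v) by (apply Hi; lra).
  pose proof (Hhead u 1 Hc Hb Hu ltac:(lra) ltac:(lra)).
  pose proof (Htail 1 v ltac:(lra) ltac:(lra)).
  lra.
Qed.

Lemma is_RInt_imp_gamma_kernel c be : 0 < c -> 0 < be ->
  exists l, is_RInt_imp (gamma_kernel c be) 0 p_infty l.
Proof.
  intros Hc Hb. destruct (RInt_gamma_kernel_bounded c be Hc Hb) as [B HB].
  destruct (is_RInt_imp_bounded (gamma_kernel c be) 0 p_infty B) as [l [Hl _]]; simpl; auto.
  - apply ex_RInt_in_gamma_kernel.
  - intros t _ _. left. apply gamma_kernel_pos.
  - exists l. exact Hl.
Qed.

Definition beta_kernel (a b s t : R) := Rpower t (a - 1) * Rpower (s - t) (b - 1).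

(* Bound on the incomplete beta integrals over (0, s), normalised to [s = 1]: on each half
   of (0, s) the factor with the non-singular endpoint is at most the sum of its values at
   [s / 2] and [s]. *)
Definition beta_const (a b : R) :=
  (Rpower (1 / 2) (b - 1) + 1) * Rpower (1 / 2) a / a
  + (Rpower (1 / 2) (a - 1) + 1) * Rpower (1 / 2) b / b.

Lemma beta_const_pos a b : 0 < a -> 0 < b -> 0 < beta_const a b.
Proof.
  intros. unfold beta_const.
  pose proof (Rpower_gt_0 (1 / 2) (b - 1)). pose proof (Rpower_gt_0 (1 / 2) a).
  pose proof (Rpower_gt_0 (1 / 2) (a - 1)). pose proof (Rpower_gt_0 (1 / 2) b).
  apply Rplus_lt_0_compat; apply Rdiv_lt_0_compat; try apply Rmult_lt_0_compat; lra.
Qed.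

Lemma beta_kernel_pos a b s t : 0 < beta_kernel a b s t.
Proof. apply Rmult_lt_0_compat; apply Rpower_gt_0. Qed.

Lemma continuous_Rpower_reflect e s t : t < s -> continuous (fun t => Rpower (s - t) e) t.
Proof.
  intros Ht. apply (continuous_ext (fun t => Rpower ((-1) * t + s) e)); [intros; f_equal; ring|].
  apply (continuous_comp_Rlin (fun y => Rpower y e)), continuous_Rpower_base. lra.
Qed.

Lemma continuous_beta_kernel a b s t : 0 < t < s -> continuous (beta_kernel a b s) t.
Proof.
  intros Ht. apply continuous_Rmult; [apply continuous_Rpower_base | apply
      continuous_Rpower_reflect]; lra.
Qed.

Lemma ex_RInt_in_beta_kernel a b s : ex_RInt_in (beta_kernel a b s) 0 (Finite s).
Proof.
  apply ex_RInt_in_continuous. intros t Ht Hts. apply continuous_beta_kernel. simpl in Hts. lra.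
Qed.

Lemma RInt_beta_kernel_le_left a b s u : 0 < a -> 0 < u <= s / 2 ->
  RInt (beta_kernel a b s) u (s / 2)
  <= (Rpower (s / 2) (b - 1) + Rpower s (b - 1)) * (Rpower (s / 2) a / a).
Proof.
  intros Ha Hu. set (Cb := Rpower (s / 2) (b - 1) + Rpower s (b - 1)).
  assert (HCb : 0 < Cb)
    by (pose proof (Rpower_gt_0 (s / 2) (b - 1)); pose proof (Rpower_gt_0 s (b - 1));
    unfold Cb; lra).
  apply Rle_trans with (RInt (fun t => Cb * Rpower t (a - 1)) u (s / 2)).
  - apply RInt_le; [lra | apply ex_RInt_in_beta_kernel; simpl; lra
                   | exact (ex_RInt_scal _ _ _ Cb (ex_RInt_Rpower u (s / 2) (a - 1) ltac:(lra))) |].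
    intros x Hx. unfold beta_kernel. rewrite Rmult_comm.
    apply Rmult_le_compat_r; [left; apply Rpower_gt_0 | apply Rpower_le_ends; lra].
  - rewrite RInt_scal_R by (apply ex_RInt_Rpower; lra).
    rewrite RInt_Rpower by lra. apply Rmult_le_compat_l; [lra|].
    pose proof (Rpower_gt_0 u a). apply Rmult_le_compat_r; [left; apply Rinv_0_lt_compat|]; lra.
Qed.

Lemma RInt_beta_kernel_le_right a b s v : 0 < b -> s / 2 <= v < s ->
  RInt (beta_kernel a b s) (s / 2) v
  <= (Rpower (s / 2) (a - 1) + Rpower s (a - 1)) * (Rpower (s / 2) b / b).
Proof.
  intros Hb Hv. set (Ca := Rpower (s / 2) (a - 1) + Rpower s (a - 1)).
  assert (HCa : 0 < Ca)
    by (pose proof (Rpower_gt_0 (s / 2) (a - 1)); pose proof (Rpower_gt_0 s (a - 1));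
    unfold Ca; lra).
  assert (Hex : ex_RInt (fun t => Rpower (s - t) (b - 1)) (s / 2) v)
    by (apply ex_RInt_continuous_R; [lra | intros; apply continuous_Rpower_reflect; lra]).
  apply Rle_trans with (RInt (fun t => Ca * Rpower (s - t) (b - 1)) (s / 2) v).
  - apply RInt_le;
      [lra | apply ex_RInt_in_beta_kernel; simpl; lra | exact (ex_RInt_scal _ _ _ Ca Hex) |].
    intros x Hx. unfold beta_kernel.
    apply Rmult_le_compat_r; [left; apply Rpower_gt_0 | apply Rpower_le_ends; lra].
  - rewrite RInt_scal_R by exact Hex.
    rewrite RInt_Rpower_reflect by lra. replace (s - s / 2) with (s / 2) by field.
    apply Rmult_le_compat_l; [lra|].
    pose proof (Rpower_gt_0 (s - v) b).
    apply Rmult_le_compat_r; [left; apply Rinv_0_lt_compat|]; lra.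
Qed.

Lemma beta_const_scale a b s : 0 < a -> 0 < b -> 0 < s ->
  (Rpower (s / 2) (b - 1) + Rpower s (b - 1)) * (Rpower (s / 2) a / a)
  + (Rpower (s / 2) (a - 1) + Rpower s (a - 1)) * (Rpower (s / 2) b / b)
  = beta_const a b * Rpower s (a + b - 1).
Proof.
  intros Ha Hb Hs. unfold beta_const. replace (s / 2) with (1 / 2 * s) by field.
  rewrite <- !Rpower_mult_distr by lra.
  replace (a + b - 1) with ((b - 1) + a) by ring. rewrite Rpower_plus.
  assert (H6 : Rpower s (a - 1) * Rpower s b = Rpower s (b - 1) * Rpower s a)
    by (rewrite <- !Rpower_plus; f_equal; ring).
  set (X := Rpower s (b - 1)) in *. set (Y := Rpower s a) in *.
  set (Z := Rpower s (a - 1)) in *. set (W := Rpower s b) in *.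
  transitivity ((X * Y) * ((Rpower (1 / 2) (b - 1) + 1) * Rpower (1 / 2) a / a)
     + (Z * W) * ((Rpower (1 / 2) (a - 1) + 1) * Rpower (1 / 2) b / b)); [field; lra|].
  rewrite H6. field; lra.
Qed.

Lemma RInt_beta_kernel_le a b s u v : 0 < a -> 0 < b -> 0 < u -> u <= v -> v < s ->
  RInt (beta_kernel a b s) u v <= beta_const a b * Rpower s (a + b - 1).
Proof.
  intros Ha Hb Hu Huv Hvs.
  pose proof (Rmin_l u (s / 2)). pose proof (Rmin_r u (s / 2)).
  pose proof (Rmax_l v (s / 2)). pose proof (Rmax_r v (s / 2)).
  set (u' := Rmin u (s / 2)) in *. set (v' := Rmax v (s / 2)) in *.
  assert (0 < u') by (unfold u'; apply Rmin_glb_lt; lra).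
  assert (v' < s) by (unfold v'; apply Rmax_lub_lt; lra).
  apply Rle_trans with (RInt (beta_kernel a b s) u' v').
  { apply (RInt_nonneg_in_mono _ 0 (Finite s)); auto; [apply ex_RInt_in_beta_kernel|].
    intros t _ _. left. apply beta_kernel_pos. }
  rewrite <- (RInt_Chasles_R _ u' (s / 2) v') by (apply ex_RInt_in_beta_kernel; simpl; auto; lra).
  rewrite <- beta_const_scale by lra.
  pose proof (RInt_beta_kernel_le_left a b s u' Ha ltac:(lra)).
  pose proof (RInt_beta_kernel_le_right a b s v' Hb ltac:(lra)).
  lra.
Qed.

(** * The confluent hypergeometric function *)

Definition hyp1F1_coef (m mu : R) (n : nat) := poch m n / poch mu n / INR (Factorial.fact n).

Lemma poch_pos c n : 0 < c -> 0 < poch c n.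
Proof.
  intros Hc. induction n as [|n IH]; simpl; [lra|].
  apply Rmult_lt_0_compat; auto. pose proof (pos_INR n). lra.
Qed.

Lemma hyp1F1_coef_pos m mu n : 0 < m -> 0 < mu -> 0 < hyp1F1_coef m mu n.
Proof.
  intros. apply Rdiv_lt_0_compat; [apply Rdiv_lt_0_compat; apply poch_pos; auto|].
  apply INR_fact_lt_0.
Qed.

Lemma hyp1F1_term_coef m mu x n : hyp1F1_term m mu x n = hyp1F1_coef m mu n * x ^ n.
Proof. unfold hyp1F1_term, hyp1F1_coef, Rdiv. ring. Qed.

Lemma hyp1F1_coef_succ m mu n : 0 < m -> 0 < mu ->
  hyp1F1_coef m mu (S n) / hyp1F1_coef m mu n = (m + INR n) / ((mu + INR n) * INR (S n)).
Proof.
  intros Hm Hmu. unfold hyp1F1_coef. simpl poch. rewrite fact_simpl, mult_INR.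
  pose proof (poch_pos m n Hm). pose proof (poch_pos mu n Hmu). pose proof (INR_fact_lt_0 n).
  pose proof (pos_INR n). rewrite S_INR. field. repeat split; lra.
Qed.

Lemma CV_radius_hyp1F1_coef m mu : 0 < m -> 0 < mu -> CV_radius (hyp1F1_coef m mu) = p_infty.
Proof.
  intros Hm Hmu. apply CV_radius_infinite_DAlembert.
  { intros n. pose proof (hyp1F1_coef_pos m mu n Hm Hmu). lra. }
  set (C := Rmax 1 (m / mu)).
  apply is_lim_seq_le_le with (fun _ => 0) (fun n => C * / INR (S n)).
  - intros n. rewrite hyp1F1_coef_succ by auto. pose proof (pos_INR n).
    assert (HS : 0 < INR (S n)) by (rewrite S_INR; lra).
    assert (Hq : (m + INR n) / (mu + INR n) <= C).
    { unfold C. destruct (Rle_dec m mu).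
      - apply Rle_trans with 1; [|apply Rmax_l].
        apply Rmult_le_reg_r with (mu + INR n); [lra|]. field_simplify; lra.
      - apply Rle_trans with (m / mu); [|apply Rmax_r].
        apply Rmult_le_reg_r with (mu * (mu + INR n)); [nra|]. field_simplify; nra. }
    rewrite Rabs_pos_eq by (apply Rdiv_le_0_compat; [lra | apply Rmult_lt_0_compat; lra]).
    split; [apply Rdiv_le_0_compat; [lra | apply Rmult_lt_0_compat; lra]|].
    replace ((m + INR n) / ((mu + INR n) * INR (S n)))
      with ((m + INR n) / (mu + INR n) * / INR (S n)) by (field; lra).
    apply Rmult_le_compat_r; [left; apply Rinv_0_lt_compat|]; lra.
  - apply is_lim_seq_const.
  - replace (Finite 0) with (Rbar_mult C 0) by (simpl; f_equal; ring).
    apply is_lim_seq_scal_l.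
    replace (Finite 0) with (Rbar_inv p_infty) by reflexivity.
    apply is_lim_seq_inv; [|discriminate].
    apply (is_lim_seq_incr_1 INR p_infty), is_lim_seq_INR.
Qed.

Lemma infinite_sum_hyp1F1_PSeries m mu x : 0 < m -> 0 < mu ->
  infinite_sum (hyp1F1_term m mu x) (PSeries (hyp1F1_coef m mu) x).
Proof.
  intros Hm Hmu. apply is_series_Reals.
  assert (Hp : is_pseries (hyp1F1_coef m mu) x (PSeries (hyp1F1_coef m mu) x)).
  { apply PSeries_correct, CV_radius_inside. rewrite CV_radius_hyp1F1_coef by auto. exact I. }
  eapply is_series_ext; [|exact Hp].
  intros n. rewrite hyp1F1_term_coef, pow_n_pow. apply Rmult_comm.
Qed.

Lemma hyp1F1_PSeries m mu x : 0 < m -> 0 < mu -> hyp1F1 m mu x = PSeries (hyp1F1_coef m mu) x.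
Proof.
  intros Hm Hmu. pose proof (infinite_sum_hyp1F1_PSeries m mu x Hm Hmu) as Hs.
  unfold hyp1F1. apply (uniqueness_sum (hyp1F1_term m mu x)); auto.
  apply epsilon_spec. exists (PSeries (hyp1F1_coef m mu) x); auto.
Qed.

Lemma continuous_hyp1F1 m mu x : 0 < m -> 0 < mu -> continuous (hyp1F1 m mu) x.
Proof.
  intros Hm Hmu. apply (continuous_ext (PSeries (hyp1F1_coef m mu))).
  { intros; rewrite hyp1F1_PSeries; auto. }
  apply continuity_pt_filterlim, PSeries_continuity.
  rewrite CV_radius_hyp1F1_coef by auto. exact I.
Qed.

Lemma infinite_sum_ge (s : nat -> R) l c : infinite_sum s l ->
  (forall n, c <= sum_f_R0 s n) -> c <= l.
Proof.
  intros Hs Hc. apply Rnot_lt_le. intro Hlt.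
  destruct (Hs (c - l)) as [N HN]; [lra|]. specialize (HN N (le_n N)). specialize (Hc N).
  unfold Rdist in HN. apply Rabs_def2 in HN. lra.
Qed.

Lemma hyp1F1_ge_1 m mu y : 0 < m -> 0 < mu -> 0 <= y -> 1 <= hyp1F1 m mu y.
Proof.
  intros Hm Hmu Hy. rewrite hyp1F1_PSeries by auto.
  apply (infinite_sum_ge _ _ 1 (infinite_sum_hyp1F1_PSeries m mu y Hm Hmu)).
  induction n as [|n IH]; simpl; rewrite hyp1F1_term_coef.
  - unfold hyp1F1_coef. simpl. lra.
  - pose proof (hyp1F1_coef_pos m mu (S n) Hm Hmu). pose proof (pow_le y (S n) Hy). nra.
Qed.

Fixpoint max_upto (g : nat -> R) (N : nat) : R :=
  match N with O => g O | S k => Rmax (max_upto g k) (g (S k)) end.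

Lemma max_upto_ge g N n : (n <= N)%nat -> g n <= max_upto g N.
Proof.
  induction N as [|N IH]; intros H.
  - inversion H; simpl; lra.
  - inversion H; subst; simpl; [apply Rmax_r|].
    eapply Rle_trans; [apply IH; auto | apply Rmax_l].
Qed.

(* The ratio of consecutive terms of [(m)_n / ((mu)_n rho^n)] tends to [1 / rho < 1]: it is
   at most [1] from [N0 > m / (rho - 1)] on. *)
Lemma poch_ratio_le_geom m mu rho : 0 < m -> 0 < mu -> 1 < rho ->
  exists K, 0 < K /\ forall n, poch m n / poch mu n <= K * rho ^ n.
Proof.
  intros Hm Hmu Hr.
  set (r := fun n => poch m n / (poch mu n * rho ^ n)).
  assert (Hrpos : forall n, 0 < r n).
  { intros n. apply Rdiv_lt_0_compat; [apply poch_pos; auto|].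
    apply Rmult_lt_0_compat; [apply poch_pos; auto | apply pow_lt; lra]. }
  assert (HrS : forall n, r (S n) = r n * ((m + INR n) / ((mu + INR n) * rho))).
  { intros n. unfold r. simpl. pose proof (poch_pos m n Hm). pose proof (poch_pos mu n Hmu).
    pose proof (pos_INR n). pose proof (pow_lt rho n ltac:(lra)). field. repeat split; lra. }
  destruct (INR_archimed 1 (m / (rho - 1))) as [N0 HN0]; [lra|]. rewrite Rmult_1_r in HN0.
  assert (Hdec : forall k, r (N0 + k)%nat <= r N0).
  { induction k as [|k IH]; [rewrite Nat.add_0_r; lra|].
    rewrite Nat.add_succ_r, HrS. pose proof (Hrpos (N0 + k)%nat).
    assert ((m + INR (N0 + k)) / ((mu + INR (N0 + k)) * rho) <= 1).
    { rewrite plus_INR. pose proof (pos_INR k). pose proof (pos_INR N0).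
      assert (m < (rho - 1) * INR N0).
      { apply Rmult_lt_reg_r with (/ (rho - 1)); [apply Rinv_0_lt_compat; lra|].
        replace ((rho - 1) * INR N0 * / (rho - 1)) with (INR N0) by (field; lra). auto. }
      apply Rmult_le_reg_r with ((mu + (INR N0 + INR k)) * rho); [apply Rmult_lt_0_compat; lra|].
      field_simplify; nra. }
    nra. }
  exists (max_upto r N0). split.
  { eapply Rlt_le_trans; [apply (Hrpos 0%nat) | apply max_upto_ge; lia]. }
  intros n. assert (r n <= max_upto r N0).
  { destruct (Nat.le_gt_cases n N0); [apply max_upto_ge; auto|].
    replace n with (N0 + (n - N0))%nat by lia.
    eapply Rle_trans; [apply Hdec | apply max_upto_ge; lia]. }
  replace (poch m n / poch mu n) with (r n * rho ^ n).
  - apply Rmult_le_compat_r; [apply pow_le; lra | auto].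
  - unfold r. pose proof (poch_pos mu n Hmu). pose proof (pow_lt rho n ltac:(lra)). field; lra.
Qed.

Lemma hyp1F1_le_exp m mu rho : 0 < m -> 0 < mu -> 1 < rho ->
  exists K, 0 < K /\ forall y, 0 <= y -> hyp1F1 m mu y <= K * exp (rho * y).
Proof.
  intros Hm Hmu Hr. destruct (poch_ratio_le_geom m mu rho Hm Hmu Hr) as [K [HK Hb]].
  exists K. split; auto. intros y Hy. rewrite hyp1F1_PSeries by auto.
  assert (He : is_series (fun i => / INR (Factorial.fact i) * (rho * y) ^ i) (exp (rho * y))).
  { apply is_series_Reals. unfold exp. destruct (exist_exp (rho * y)). auto. }
  rewrite <- (is_series_unique _ _ He), <- Series_scal_l.
  apply Series_le.
  - intros n. pose proof (hyp1F1_coef_pos m mu n Hm Hmu). pose proof (pow_le y n Hy).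
    pose proof (INR_fact_lt_0 n). specialize (Hb n).
    assert (0 < / INR (Factorial.fact n)) by (apply Rinv_0_lt_compat; lra).
    split; [nra|]. unfold hyp1F1_coef. rewrite Rpow_mult_distr.
    replace (poch m n / poch mu n / INR (Factorial.fact n) * y ^ n)
      with ((poch m n / poch mu n) * (y ^ n * / INR (Factorial.fact n))) by (unfold Rdiv; ring).
    replace (K * (/ INR (Factorial.fact n) * (rho ^ n * y ^ n)))
      with ((K * rho ^ n) * (y ^ n * / INR (Factorial.fact n))) by ring.
    apply Rmult_le_compat_r; [apply Rmult_le_pos; lra | auto].
  - apply (ex_series_scal_l (K:=R_AbsRing) (V:=R_NormedModule)). exists (exp (rho * y)). auto.
Qed.

(** * The kappa-mu shadowed density *)

Lemma Gamma_fn_pos mu : 0 < mu -> 0 < Gamma_fn mu.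
Proof.
  intros Hmu. destruct (RInt_gamma_kernel_bounded mu 1 Hmu ltac:(lra)) as [B HB].
  destruct (is_RInt_imp_bounded (gamma_kernel mu 1) 0 p_infty B) as [l [Hl [_ Hsup]]];
    [exact I | apply ex_RInt_in_gamma_kernel | intros t _ _; left; apply gamma_kernel_pos
    | intros; apply HB; auto |].
  assert (Heq : forall t, 0 < t -> Rbar_lt t p_infty ->
    gamma_kernel mu 1 t = Rpower t (mu - 1) * exp (- t)).
  { intros t _ _. unfold gamma_kernel. do 3 f_equal. ring. }
  unfold Gamma_fn. rewrite (imp_int_0inf_eq _ l).
  - apply (is_RInt_imp_pos (gamma_kernel mu 1) 0 p_infty 1);
      [apply ex_RInt_in_gamma_kernel | lra | exact I | apply continuous_gamma_kernel; lra
      | apply gamma_kernel_pos | auto].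
  - exact (ex_RInt_in_ext _ _ 0 p_infty Heq (ex_RInt_in_gamma_kernel mu 1)).
  - exact (is_RInt_imp_ext _ _ 0 p_infty l Heq Hl).
Qed.

Definition ksm_params (k mu m xb : R) := 0 <= k /\ 0 < mu /\ 0 < m /\ 0 < xb.

Definition ksm_norm (k mu m xb : R) :=
  Rpower (ksm_theta k mu xb) (mu - m) * Rpower (ksm_lambda k mu m xb) m * Gamma_fn mu.

Definition ksm_factor (k mu m xb x : R) :=
  / ksm_norm k mu m xb * exp (- x / ksm_theta k mu xb) *
  hyp1F1 m mu (x / ksm_theta k mu xb - x / ksm_lambda k mu m xb).

Section KappaMuShadowed.
Variables (k mu m xb : R).
Hypothesis (Hp : ksm_params k mu m xb).

Let th := ksm_theta k mu xb.
Let la := ksm_lambda k mu m xb.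

Lemma ksm_pdf_factor x : 0 < x -> ksm_pdf k mu m xb x = Rpower x (mu - 1) * ksm_factor k mu m xb x.
Proof.
  intros Hx. unfold ksm_pdf, ksm_factor, ksm_norm. cbv zeta.
  destruct (Rle_dec 0 x); [|lra]. destruct (Rlt_dec 0 x); [|lra]. unfold Rdiv. ring.
Qed.

Lemma ksm_theta_le_lambda : 0 < th /\ th <= la.
Proof.
  destruct Hp as [Hk [Hmu [Hm Hxb]]]. unfold th, la, ksm_theta, ksm_lambda.
  assert (0 < mu * (1 + k)) by nra. assert (0 <= mu * k) by nra.
  split; [apply Rdiv_lt_0_compat; auto|].
  apply Rmult_le_reg_r with (mu * (1 + k) * m); [nra|]. field_simplify; nra.
Qed.

Lemma ksm_norm_pos : 0 < ksm_norm k mu m xb.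
Proof.
  destruct Hp as [_ [Hmu _]].
  apply Rmult_lt_0_compat; [apply Rmult_lt_0_compat; apply Rpower_gt_0 | apply Gamma_fn_pos; auto].
Qed.

Lemma continuous_ksm_factor x : continuous (ksm_factor k mu m xb) x.
Proof.
  destruct Hp as [_ [Hmu [Hm _]]]. unfold ksm_factor. fold th la.
  apply continuous_Rmult; [apply continuous_Rmult; [apply continuous_const|] |].
  - apply (continuous_ext (fun x => exp ((- / th) * x + 0))); [intros; f_equal; unfold Rdiv; ring|].
    apply (continuous_comp_Rlin exp), continuous_exp.
  - apply (continuous_ext (fun x => hyp1F1 m mu ((/ th - / la) * x + 0))).
    { intros; f_equal; unfold Rdiv; ring. }
    apply (continuous_comp_Rlin (hyp1F1 m mu)), continuous_hyp1F1; auto.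
Qed.

Lemma ksm_factor_pos x : 0 <= x -> 0 < ksm_factor k mu m xb x.
Proof.
  intros Hx. destruct Hp as [_ [Hmu [Hm _]]]. destruct ksm_theta_le_lambda as [Ht Htl].
  unfold ksm_factor. fold th la.
  apply Rmult_lt_0_compat;
    [apply Rmult_lt_0_compat; [apply Rinv_0_lt_compat, ksm_norm_pos | apply exp_pos]|].
  assert (x / la <= x / th) by (apply Rmult_le_compat_l; auto; apply Rinv_le_contravar; auto).
  pose proof (hyp1F1_ge_1 m mu (x / th - x / la) Hm Hmu ltac:(lra)). lra.
Qed.

(* [1F1(m; mu; y) = O(e^(rho y))] for any [rho > 1], and the argument of [1F1] grows like
   [x / th - x / la], strictly slower than the decay rate [x / th]. *)
Lemma ksm_factor_le_exp : exists H be, 0 < H /\ 0 < be /\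
  forall x, 0 <= x -> ksm_factor k mu m xb x <= H * exp (- (be * x)).
Proof.
  destruct Hp as [_ [Hmu [Hm _]]]. destruct ksm_theta_le_lambda as [Ht Htl].
  set (al := / th - / la).
  assert (Hal : 0 <= al < / th).
  { assert (/ la <= / th) by (apply Rinv_le_contravar; lra).
    assert (0 < / la) by (apply Rinv_0_lt_compat; lra). unfold al; lra. }
  set (c := / th) in *. set (rho := 2 * c / (c + al)).
  assert (Hrho : 1 < rho /\ rho * al < c).
  { assert (0 < (c - al) / (c + al)) by (apply Rdiv_lt_0_compat; lra).
    assert (0 < c * (c - al) / (c + al)) by (apply Rdiv_lt_0_compat; nra).
    unfold rho. split.
    - replace (2 * c / (c + al)) with (1 + (c - al) / (c + al)) by (field; lra). lra.
    - replace (2 * c / (c + al) * al) with (c - c * (c - al) / (c + al)) by (field; lra). lra. }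
  destruct (hyp1F1_le_exp m mu rho Hm Hmu (proj1 Hrho)) as [K [HK HKb]].
  pose proof ksm_norm_pos as HN.
  exists (/ ksm_norm k mu m xb * K), (c - rho * al). split; [|split; [lra|]].
  { apply Rmult_lt_0_compat; auto. apply Rinv_0_lt_compat; auto. }
  intros x Hx. unfold ksm_factor. fold th la.
  replace (x / th - x / la) with (al * x) by (unfold al, c, Rdiv; ring).
  specialize (HKb (al * x) ltac:(nra)).
  assert (0 < / ksm_norm k mu m xb) by (apply Rinv_0_lt_compat; auto).
  apply Rle_trans with (/ ksm_norm k mu m xb * exp (- x / th) * (K * exp (rho * (al * x)))).
  { apply Rmult_le_compat_l; auto. apply Rmult_le_pos; [lra | left; apply exp_pos]. }
  replace (/ ksm_norm k mu m xb * exp (- x / th) * (K * exp (rho * (al * x))))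
    with (/ ksm_norm k mu m xb * K * (exp (- x / th) * exp (rho * (al * x)))) by ring.
  rewrite <- exp_plus. right. do 2 f_equal. unfold c, Rdiv. ring.
Qed.

Lemma ksm_factor_bounded : exists H, 0 < H /\ forall x, 0 <= x -> ksm_factor k mu m xb x <= H.
Proof.
  destruct ksm_factor_le_exp as [H [be [HH [Hbe Hb]]]].
  exists H. split; [auto|]. intros x Hx. eapply Rle_trans; [apply Hb; auto|].
  pose proof (exp_neg_le_1 (be * x) ltac:(nra)). nra.
Qed.

Lemma continuous_ksm_pdf s : 0 < s -> continuous (ksm_pdf k mu m xb) s.
Proof.
  intros Hs.
  apply (continuous_loc_ext _ (fun x => Rpower x (mu - 1) * ksm_factor k mu m xb x) s s Hs).
  - intros y Hy. apply Rabs_def2 in Hy. apply ksm_pdf_factor. lra.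
  - apply continuous_Rmult; [apply continuous_Rpower_base; auto | apply continuous_ksm_factor].
Qed.

End KappaMuShadowed.

(** * Densities dominated by a gamma kernel *)

Definition gamma_dominated (g : R -> R) := exists a A be, 0 < a /\ 0 < A /\ 0 < be /\
  (forall s, 0 < s -> continuous g s) /\
  (forall s, 0 < s -> 0 <= g s <= A * gamma_kernel a be s) /\
  (exists s0, 0 < s0 /\ 0 < g s0).

Lemma ksm_pdf_gamma_dominated k mu m xb : ksm_params k mu m xb ->
  gamma_dominated (ksm_pdf k mu m xb).
Proof.
  intros Hp. pose proof Hp as [_ [Hmu _]].
  destruct (ksm_factor_le_exp k mu m xb Hp) as [H [be [HH [Hbe Hb]]]].
  exists mu, H, be. do 3 (split; [auto|]). split; [|split].
  - intros s Hs. apply continuous_ksm_pdf; auto.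
  - intros s Hs. rewrite ksm_pdf_factor by auto. unfold gamma_kernel.
    pose proof (Rpower_gt_0 s (mu - 1)). pose proof (ksm_factor_pos k mu m xb Hp s ltac:(lra)).
    specialize (Hb s ltac:(lra)). split; nra.
  - exists 1. split; [lra|]. rewrite ksm_pdf_factor by lra.
    apply Rmult_lt_0_compat; [apply Rpower_gt_0 | apply ksm_factor_pos; auto; lra].
Qed.

Lemma gamma_dominated_le_on (h : R -> R) c C be lo hi : 0 < lo -> 0 < C -> 0 < be ->
  (forall s, 0 < s -> 0 <= h s <= C * gamma_kernel c be s) ->
  forall x, lo <= x <= hi -> 0 <= h x <= C * (Rpower lo (c - 1) + Rpower hi (c - 1)).
Proof.
  intros Hlo HC Hbe Hh x Hx. destruct (Hh x) as [H1 H2]; [lra|]. split; auto.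
  eapply Rle_trans; [exact H2|]. apply Rmult_le_compat_l; [lra|].
  eapply Rle_trans; [apply gamma_kernel_le_Rpower; lra | apply Rpower_le_ends; lra].
Qed.

Lemma Rabs_three_terms_le (ds d1 d2 f1 g1 f0 s0 Mf Mg E : R) : 0 <= f1 <= Mf -> 0 <= g1 <= Mg ->
  0 <= f0 <= Mf -> 0 < s0 -> Rabs ds <= E -> Rabs d1 <= E -> Rabs d2 <= E ->
  Rabs (ds * f1 * g1 + s0 * d1 * g1 + s0 * f0 * d2) <= (Mf * Mg + s0 * Mg + s0 * Mf) * E.
Proof.
  intros. eapply Rle_trans; [apply Rabs_triang|].
  eapply Rle_trans; [apply Rplus_le_compat_r, Rabs_triang|]. rewrite !Rabs_mult.
  rewrite (Rabs_pos_eq f1), (Rabs_pos_eq g1), (Rabs_pos_eq f0), (Rabs_pos_eq s0) by lra.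
  pose proof (Rabs_pos ds). pose proof (Rabs_pos d1). pose proof (Rabs_pos d2).
  assert (Rabs ds * f1 * g1 <= E * Mf * Mg)
    by (apply Rmult_le_compat; [nra | lra | apply Rmult_le_compat; lra | lra]).
  assert (s0 * Rabs d1 * g1 <= s0 * E * Mg)
    by (apply Rmult_le_compat; [nra | lra | apply Rmult_le_compat; lra | lra]).
  assert (s0 * f0 * Rabs d2 <= s0 * Mf * E)
    by (apply Rmult_le_compat; [nra | lra | apply Rmult_le_compat; lra | lra]).
  nra.
Qed.

Lemma scaled_split_in_range s0 s p q u :
  0 < s0 -> 0 < p -> q < 1 -> s0 / 2 < s < 2 * s0 -> p <= u <= q ->
  Rmin (s0 * p / 2) (s0 * (1 - q) / 2) <= s * u <= 2 * s0 /\
  Rmin (s0 * p / 2) (s0 * (1 - q) / 2) <= s - s * u <= 2 * s0.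
Proof.
  intros Hs0 Hp Hq Hs Hu.
  pose proof (Rmin_l (s0 * p / 2) (s0 * (1 - q) / 2)).
  pose proof (Rmin_r (s0 * p / 2) (s0 * (1 - q) / 2)).
  assert (0 <= (s - s0 / 2) * u /\ 0 <= s0 / 2 * (u - p) /\ 0 <= s * (1 - u)
    /\ 0 <= (s - s0 / 2) * (1 - u) /\ 0 <= s0 / 2 * (q - u) /\ 0 <= s * u)
    by (repeat split; apply Rmult_le_pos; lra).
  lra.
Qed.

Lemma scaled_split_dist s s0 u : 0 <= u <= 1 ->
  Rabs (s * u - s0 * u) <= Rabs (s - s0) /\ Rabs ((s - s * u) - (s0 - s0 * u)) <= Rabs (s - s0).
Proof.
  intros Hu. pose proof (Rabs_pos (s - s0)).
  replace (s * u - s0 * u) with ((s - s0) * u) by ring.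
  replace ((s - s * u) - (s0 - s0 * u)) with ((s - s0) * (1 - u)) by ring.
  rewrite !Rabs_mult, (Rabs_pos_eq u), (Rabs_pos_eq (1 - u)) by lra. split; nra.
Qed.

Section Convolution.
Variables (f g : R -> R) (a A b B be : R).
Hypotheses (Ha : 0 < a) (HA : 0 < A) (Hb : 0 < b) (HB : 0 < B) (Hbe : 0 < be)
  (Hfc : forall s, 0 < s -> continuous f s) (Hgc : forall s, 0 < s -> continuous g s)
  (Hfb : forall s, 0 < s -> 0 <= f s <= A * gamma_kernel a be s)
  (Hgb : forall s, 0 < s -> 0 <= g s <= B * gamma_kernel b be s).

Definition conv_integrand (s t : R) := f t * g (s - t).

Lemma continuous_conv_integrand s t : 0 < t < s -> continuous (conv_integrand s) t.
Proof.
  intros Ht. apply continuous_Rmult; [apply Hfc; lra|].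
  apply (continuous_ext (fun u => g (-1 * u + s))); [intros; f_equal; ring|].
  apply continuous_comp_Rlin, Hgc. lra.
Qed.

Lemma ex_RInt_in_conv_integrand s : ex_RInt_in (conv_integrand s) 0 (Finite s).
Proof.
  apply ex_RInt_in_continuous. intros t Ht Hts. apply continuous_conv_integrand. simpl in Hts. lra.
Qed.

Lemma nonneg_in_conv_integrand s : nonneg_in (conv_integrand s) 0 (Finite s).
Proof.
  intros t Ht Hts. simpl in Hts. destruct (Hfb t Ht). destruct (Hgb (s - t)); [lra|].
  apply Rmult_le_pos; auto.
Qed.

Lemma conv_integrand_le s t : 0 < t < s ->
  conv_integrand s t <= (A * B * exp (- (be * s))) * beta_kernel a b s t.
Proof.
  intros Ht. destruct (Hfb t) as [H1 H2]; [lra|]. destruct (Hgb (s - t)) as [H3 H4]; [lra|].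
  apply Rle_trans with ((A * gamma_kernel a be t) * (B * gamma_kernel b be (s - t))).
  { apply Rmult_le_compat; auto. }
  unfold gamma_kernel, beta_kernel. right.
  replace (- (be * s)) with (- (be * t) + - (be * (s - t))) by ring. rewrite exp_plus. ring.
Qed.

Definition conv_const := A * B * beta_const a b.

Lemma RInt_conv_integrand_le s u v : 0 < u -> u <= v -> v < s ->
  RInt (conv_integrand s) u v <= conv_const * gamma_kernel (a + b) be s.
Proof.
  intros Hu Huv Hv. set (c := A * B * exp (- (be * s))).
  assert (Hc : 0 < c) by (apply Rmult_lt_0_compat; [nra | apply exp_pos]).
  assert (Hex : ex_RInt (beta_kernel a b s) u v) by (apply ex_RInt_in_beta_kernel; simpl; auto).
  apply Rle_trans with (RInt (fun t => c * beta_kernel a b s t) u v).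
  { apply RInt_le; [auto | apply ex_RInt_in_conv_integrand; simpl; auto
                   | exact (ex_RInt_scal _ u v c Hex) | intros; apply conv_integrand_le; lra]. }
  rewrite RInt_scal_R by exact Hex.
  apply Rle_trans with (c * (beta_const a b * Rpower s (a + b - 1))).
  - apply Rmult_le_compat_l; [lra | apply RInt_beta_kernel_le; auto].
  - unfold conv_const, gamma_kernel, c. right. ring.
Qed.

Lemma conv_is_RInt_imp s : 0 < s ->
  is_RInt_imp (conv_integrand s) 0 s (conv f g s) /\
  0 <= conv f g s <= conv_const * gamma_kernel (a + b) be s /\
  (forall u v, 0 < u -> u <= v -> Rbar_lt v s -> RInt (conv_integrand s) u v <= conv f g s).
Proof.
  intros Hs.
  destruct (is_RInt_imp_bounded (conv_integrand s) 0 (Finite s)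
      (conv_const * gamma_kernel (a + b) be s))
    as [l [Hl [Hlb Hsup]]];
    [simpl; auto | apply ex_RInt_in_conv_integrand | apply nonneg_in_conv_integrand
    | intros u v Hu Huv Hv; simpl in Hv; apply RInt_conv_integrand_le; auto |].
  replace (conv f g s) with l; [auto|].
  unfold conv. destruct (Rlt_dec 0 s); [|lra].
  symmetry. apply imp_int_ab_eq; auto. apply ex_RInt_in_conv_integrand.
Qed.

Lemma conv_pos s1 s2 : 0 < s1 -> 0 < s2 -> 0 < f s1 -> 0 < g s2 -> 0 < conv f g (s1 + s2).
Proof.
  intros H1 H2 Hf Hg. destruct (conv_is_RInt_imp (s1 + s2)) as [_ [_ Hsup]]; [lra|].
  apply (is_RInt_imp_pos (conv_integrand (s1 + s2)) 0 (s1 + s2) s1);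
    [apply ex_RInt_in_conv_integrand | lra | simpl; lra | apply continuous_conv_integrand; lra
    | | auto].
  unfold conv_integrand. replace (s1 + s2 - s1) with s2 by ring. apply Rmult_lt_0_compat; auto.
Qed.

(* The substitution [t = s u] moves the dependence on [s] from the domain (0, s) into the
   integrand, which then varies continuously with [s] on the fixed domain (0, 1). *)
Definition conv_integrand_scaled (s u : R) := s * conv_integrand s (s * u).

Lemma continuous_conv_integrand_scaled s u : 0 < s -> 0 < u < 1 ->
  continuous (conv_integrand_scaled s) u.
Proof.
  intros Hs Hu. apply continuous_Rmult; [apply continuous_const|].
  apply (continuous_ext (fun u => conv_integrand s (s * u + 0)));
    [intros; rewrite Rplus_0_r; auto|].
  apply continuous_comp_Rlin, continuous_conv_integrand. split; nra.
Qed.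

Lemma ex_RInt_in_conv_integrand_scaled s :
  0 < s -> ex_RInt_in (conv_integrand_scaled s) 0 (Finite 1).
Proof.
  intros Hs. apply ex_RInt_in_continuous. intros t Ht Ht1. simpl in Ht1.
  apply continuous_conv_integrand_scaled; auto.
Qed.

Lemma nonneg_in_conv_integrand_scaled s : 0 < s -> nonneg_in (conv_integrand_scaled s) 0 (Finite 1).
Proof.
  intros Hs t Ht Ht1. simpl in Ht1. apply Rmult_le_pos; [lra|].
  apply (nonneg_in_conv_integrand s); simpl; nra.
Qed.

Lemma conv_is_RInt_imp_scaled s :
  0 < s -> is_RInt_imp (conv_integrand_scaled s) 0 (Finite 1) (conv f g s).
Proof.
  intros Hs eps Heps. destruct (conv_is_RInt_imp s Hs) as [Hl _].
  destruct (Hl eps Heps) as [u0 [v0 [Hu0 [Huv0 [Hv0 Hc]]]]]. simpl in Hv0.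
  exists (u0 / s), (v0 / s). split; [apply Rdiv_lt_0_compat; auto|].
  split; [apply Rmult_le_compat_r; [left; apply Rinv_0_lt_compat|]; lra|].
  split; [simpl; apply Rmult_lt_reg_r with s; auto; field_simplify; lra|].
  intros p q Hp Hpu Hqv Hq. simpl in Hq.
  assert (Hsp : s * p <= u0) by (apply Rmult_le_reg_r with (/ s); [apply Rinv_0_lt_compat; auto|];
    replace (s * p * / s) with p by (field; lra); auto).
  assert (Hsq : v0 <= s * q) by (apply Rmult_le_reg_r with (/ s); [apply Rinv_0_lt_compat; auto|];
    replace (s * q * / s) with q by (field; lra); auto).
  assert (Hex : ex_RInt (conv_integrand s) (s * p + 0) (s * q + 0))
    by (rewrite !Rplus_0_r; apply ex_RInt_in_conv_integrand; simpl; nra).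
  pose proof (RInt_comp_lin (conv_integrand s) s 0 p q Hex) as E. rewrite !Rplus_0_r in E.
  replace (RInt (conv_integrand_scaled s) p q) with (RInt (conv_integrand s) (s * p) (s * q)).
  - apply Hc; simpl; nra.
  - rewrite <- E. apply RInt_ext. intros x _.
    unfold conv_integrand_scaled. rewrite Rplus_0_r. reflexivity.
Qed.

Lemma conv_integrand_scaled_le s u : 0 < s -> 0 < u < 1 ->
  conv_integrand_scaled s u <= A * B * Rpower s (a + b - 1) * beta_kernel a b 1 u.
Proof.
  intros Hs Hu. unfold conv_integrand_scaled.
  pose proof (conv_integrand_le s (s * u) ltac:(split; nra)) as H1.
  pose proof (exp_neg_le_1 (be * s) ltac:(nra)) as H2.
  pose proof (beta_kernel_pos a b s (s * u)) as H3.
  assert (H4 : s * beta_kernel a b s (s * u) = Rpower s (a + b - 1) * beta_kernel a b 1 u).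
  { unfold beta_kernel. replace (s - s * u) with (s * (1 - u)) by ring.
    rewrite <- !Rpower_mult_distr by lra.
    replace (a + b - 1) with (1 + (a - 1) + (b - 1)) by ring.
    rewrite !Rpower_plus, Rpower_1 by lra. ring. }
  apply Rle_trans with (A * B * (s * beta_kernel a b s (s * u)) * exp (- (be * s))).
  - replace (A * B * (s * beta_kernel a b s (s * u)) * exp (- (be * s)))
      with (s * (A * B * exp (- (be * s)) * beta_kernel a b s (s * u))) by ring.
    apply Rmult_le_compat_l; lra.
  - rewrite H4. assert (0 < A * B * (Rpower s (a + b - 1) * beta_kernel a b 1 u))
      by (apply Rmult_lt_0_compat;
          [nra | apply Rmult_lt_0_compat; [apply Rpower_gt_0 | apply beta_kernel_pos]]).
    nra.
Qed.

Lemma conv_integrand_scaled_unif s0 p q : 0 < s0 -> 0 < p -> p <= q -> q < 1 ->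
  forall eps, 0 < eps -> exists del, 0 < del /\
  forall s, s0 / 2 < s < 2 * s0 -> Rabs (s - s0) < del ->
  forall u, p <= u <= q -> Rabs (conv_integrand_scaled s u - conv_integrand_scaled s0 u) <= eps.
Proof.
  intros Hs0 Hp Hpq Hq eps Heps.
  set (lo := Rmin (s0 * p / 2) (s0 * (1 - q) / 2)).
  assert (Hlo : 0 < lo) by (unfold lo; apply Rmin_glb_lt; nra).
  set (Mf := A * (Rpower lo (a - 1) + Rpower (2 * s0) (a - 1))).
  set (Mg := B * (Rpower lo (b - 1) + Rpower (2 * s0) (b - 1))).
  assert (HMf : 0 < Mf) by (pose proof (Rpower_gt_0 lo (a - 1));
    pose proof (Rpower_gt_0 (2 * s0) (a - 1)); unfold Mf; nra).
  assert (HMg : 0 < Mg) by (pose proof (Rpower_gt_0 lo (b - 1));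
    pose proof (Rpower_gt_0 (2 * s0) (b - 1)); unfold Mg; nra).
  destruct (exists_small_mul (Mf * Mg + s0 * Mg + s0 * Mf) eps) as [E [HE HES]]; [nra | auto |].
  destruct (uniformly_continuous_on f lo (2 * s0)) with (eps := E) as [df [Hdf Hf]];
    [intros; apply Hfc; lra | auto |].
  destruct (uniformly_continuous_on g lo (2 * s0)) with (eps := E) as [dg [Hdg Hg]];
    [intros; apply Hgc; lra | auto |].
  pose proof (Rmin_l (Rmin df dg) E). pose proof (Rmin_r (Rmin df dg) E).
  pose proof (Rmin_l df dg). pose proof (Rmin_r df dg).
  exists (Rmin (Rmin df dg) E). split; [repeat apply Rmin_glb_lt; auto|].
  intros s Hs Hsd u Hu.
  destruct (scaled_split_in_range s0 s p q u) as [Hx1 Hy1]; auto.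
  destruct (scaled_split_in_range s0 s0 p q u) as [Hx0 Hy0]; auto; [lra|].
  destruct (scaled_split_dist s s0 u) as [Hux Huy]; [lra|].
  apply (Rle_lt_trans _ _ df) in Hux; [|lra]. apply (Rle_lt_trans _ _ dg) in Huy; [|lra].
  specialize (Hf _ _ Hx1 Hx0 Hux). specialize (Hg _ _ Hy1 Hy0 Huy).
  pose proof (gamma_dominated_le_on f a A be lo (2 * s0) Hlo HA Hbe Hfb (s * u) Hx1) as Bf1.
  pose proof (gamma_dominated_le_on f a A be lo (2 * s0) Hlo HA Hbe Hfb (s0 * u) Hx0) as Bf0.
  pose proof (gamma_dominated_le_on g b B be lo (2 * s0) Hlo HB Hbe Hgb (s - s * u) Hy1) as Bg1.
  fold Mf in Bf1, Bf0. fold Mg in Bg1.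
  unfold conv_integrand_scaled, conv_integrand.
  replace (s * (f (s * u) * g (s - s * u)) - s0 * (f (s0 * u) * g (s0 - s0 * u)))
    with ((s - s0) * f (s * u) * g (s - s * u) + s0 * (f (s * u) - f (s0 * u)) * g (s - s * u)
          + s0 * f (s0 * u) * (g (s - s * u) - g (s0 - s0 * u))) by ring.
  eapply Rle_trans; [|exact HES].
  apply (Rabs_three_terms_le _ _ _ _ _ _ s0 Mf Mg E); lra.
Qed.

Lemma continuous_conv s0 : 0 < s0 -> continuous (conv f g) s0.
Proof.
  intros Hs0.
  destruct (is_RInt_imp_bounded (beta_kernel a b 1) 0 (Finite 1)
      (beta_const a b * Rpower 1 (a + b - 1)))
    as [lb [Hlb _]];
    [simpl; lra | apply ex_RInt_in_beta_kernel | intros t _ _; left; apply beta_kernel_pos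
    | intros u v Hu Huv Hv; simpl in Hv; apply RInt_beta_kernel_le; auto |].
  set (Cw := A * B * (Rpower (s0 / 2) (a + b - 1) + Rpower (2 * s0) (a + b - 1))).
  assert (HCw : 0 < Cw).
  { pose proof (Rpower_gt_0 (s0 / 2) (a + b - 1)). pose proof (Rpower_gt_0 (2 * s0) (a + b - 1)).
    unfold Cw. apply Rmult_lt_0_compat; nra. }
  set (Z := fun s => s0 / 2 < s < 2 * s0).
  apply continuous_of_eps_delta. intros eps Heps.
  destruct (is_RInt_imp_param_continuous conv_integrand_scaled (fun u => Cw * beta_kernel a b 1 u)
    0 (Finite 1) Z s0 (conv f g) (Cw * lb)) with (eps := eps) as [del [Hdel Hc]]; auto.
  - unfold Z; lra.
  - intros s Hs; apply ex_RInt_in_conv_integrand_scaled; unfold Z in Hs; lra.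
  - intros s Hs; apply nonneg_in_conv_integrand_scaled; unfold Z in Hs; lra.
  - apply ex_RInt_in_continuous. intros t Ht Ht1. simpl in Ht1.
    apply continuous_Rmult; [apply continuous_const | apply continuous_beta_kernel; lra].
  - intros s t Hs Ht Ht1. unfold Z in Hs. simpl in Ht1.
    eapply Rle_trans; [apply conv_integrand_scaled_le; lra|].
    pose proof (Rpower_le_ends s (s0 / 2) (2 * s0) (a + b - 1) ltac:(lra) ltac:(lra)).
    pose proof (beta_kernel_pos a b 1 t).
    unfold Cw. apply Rmult_le_compat_r; [lra|]. apply Rmult_le_compat_l; nra.
  - apply is_RInt_imp_scal; [apply ex_RInt_in_beta_kernel | auto].
  - intros s Hs. apply conv_is_RInt_imp_scaled. unfold Z in Hs. lra.
  - intros u v Hu Huv Hv eps' Heps'. simpl in Hv.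
    destruct (conv_integrand_scaled_unif s0 u v Hs0 Hu Huv Hv eps' Heps') as [d [Hd0 Hd]].
    exists d. split; [exact Hd0 | exact Hd].
  - exists (Rmin del (s0 / 2)). pose proof (Rmin_l del (s0 / 2)). pose proof (Rmin_r del (s0 / 2)).
    split; [apply Rmin_glb_lt; lra|].
    intros y Hy. apply Hc; apply Rabs_def2 in Hy; [unfold Z; lra | apply Rabs_def1; lra].
Qed.

End Convolution.

Lemma conv_gamma_dominated f g :
  gamma_dominated f -> gamma_dominated g -> gamma_dominated (conv f g).
Proof.
  intros [a [A [be1 [Ha [HA [Hb1 [Hfc [Hfb [s1 [Hs1 Hf1]]]]]]]]]]
         [b [B [be2 [Hb [HB [Hb2 [Hgc [Hgb [s2 [Hs2 Hg2]]]]]]]]]].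
  set (be := Rmin be1 be2).
  assert (Hbe : 0 < be) by (apply Rmin_glb_lt; auto).
  assert (Hfb' : forall s, 0 < s -> 0 <= f s <= A * gamma_kernel a be s).
  { intros s Hs. specialize (Hfb s Hs). split; [lra|].
    eapply Rle_trans; [apply Hfb|].
    apply Rmult_le_compat_l; [lra | apply gamma_kernel_le_rate, Rmin_l; auto]. }
  assert (Hgb' : forall s, 0 < s -> 0 <= g s <= B * gamma_kernel b be s).
  { intros s Hs. specialize (Hgb s Hs). split; [lra|].
    eapply Rle_trans; [apply Hgb|].
    apply Rmult_le_compat_l; [lra | apply gamma_kernel_le_rate, Rmin_r; auto]. }
  exists (a + b), (conv_const a A b B), be. split; [lra|]. split.
  { pose proof (beta_const_pos a b Ha Hb). unfold conv_const. apply Rmult_lt_0_compat; nra. }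
  split; [auto|]. split; [|split].
  - intros s Hs. apply (continuous_conv f g a A b B be); auto.
  - intros s Hs. apply (conv_is_RInt_imp f g a A b B be); auto.
  - exists (s1 + s2). split; [lra|]. apply (conv_pos f g a A b B be); auto.
Qed.

Lemma sum_pdf_gamma_dominated (p : nat -> R -> R) n :
  (forall j, (j <= n)%nat -> gamma_dominated (p j)) -> gamma_dominated (sum_pdf p n).
Proof.
  induction n as [|n IH]; intros H; simpl; [apply H; lia|].
  apply conv_gamma_dominated; [apply H; lia | apply IH; intros; apply H; lia].
Qed.

(** * The ratio density near zero *)

Lemma is_RInt_imp_Rpower z mu : 0 < z -> 0 < mu ->
  is_RInt_imp (fun t => Rpower t (mu - 1)) 0 (Finite z) (Rpower z mu / mu).
Proof.
  intros Hz Hmu eps Heps.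
  set (eta := eps * mu / 2). assert (Heta : 0 < eta) by (unfold eta; nra).
  destruct (continuous_eps_delta (fun y => Rpower y mu) z (continuous_Rpower_base mu z Hz) eta Heta)
    as [del [Hdel Hc]].
  pose proof (Rmin_l (Rpower eta (1 / mu)) (z / 2)).
  pose proof (Rmin_r (Rpower eta (1 / mu)) (z / 2)).
  pose proof (Rmax_l (z - del / 2) (z / 2)). pose proof (Rmax_r (z - del / 2) (z / 2)).
  set (u0 := Rmin (Rpower eta (1 / mu)) (z / 2)) in *. set (v0 := Rmax (z - del / 2) (z / 2)) in *.
  assert (Hu0 : 0 < u0) by (unfold u0; apply Rmin_glb_lt; [apply Rpower_gt_0 | lra]).
  assert (Hv0z : v0 < z) by (unfold v0; apply Rmax_lub_lt; lra).
  assert (Hpu0 : Rpower u0 mu <= eta).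
  { apply Rle_trans with (Rpower (Rpower eta (1 / mu)) mu); [apply Rle_Rpower_l; lra|].
    rewrite Rpower_mult. replace (1 / mu * mu) with 1 by (field; lra). rewrite Rpower_1; lra. }
  exists u0, v0. split; [auto|]. split; [lra|]. split; [exact Hv0z|].
  intros u v Hu Huu Hvv Hv. simpl in Hv. rewrite RInt_Rpower by lra.
  assert (Hpu : Rpower u mu <= eta)
    by (apply Rle_trans with (Rpower u0 mu); [apply Rle_Rpower_l; lra | auto]).
  pose proof (Rpower_gt_0 u mu).
  assert (Hpv : Rabs (Rpower v mu - Rpower z mu) < eta) by (apply Hc, Rabs_def1; lra).
  apply Rabs_def2 in Hpv. apply Rabs_def1; apply Rmult_lt_reg_r with mu; auto;
    unfold eta in *; field_simplify; lra.
Qed.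

Lemma cdf_pos_Rpower_bounds (f : R -> R) mu z lo hi : 0 < mu -> 0 < z ->
  (forall t, 0 < t < z -> continuous f t) ->
  (forall t, 0 < t < z -> 0 <= lo * Rpower t (mu - 1) <= f t /\ f t <= hi * Rpower t (mu - 1)) ->
  lo * (Rpower z mu / mu) <= cdf_pos f z <= hi * (Rpower z mu / mu).
Proof.
  intros Hmu Hz Hc Hb.
  assert (Hi : ex_RInt_in f 0 (Finite z))
    by (apply ex_RInt_in_continuous; intros t Ht Htz; apply Hc; simpl in Htz; lra).
  assert (Hipow : forall c, ex_RInt_in (fun t => c * Rpower t (mu - 1)) 0 (Finite z)).
  { intros c. apply ex_RInt_in_continuous. intros t Ht _.
    apply continuous_Rmult; [apply continuous_const | apply continuous_Rpower_base; auto]. }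
  destruct (is_RInt_imp_bounded f 0 (Finite z) (hi * (Rpower z mu / mu))) as [l [Hl [[_ Hlb] _]]].
  - simpl; lra.
  - exact Hi.
  - intros t Ht Htz. simpl in Htz. specialize (Hb t (conj Ht Htz)). lra.
  - intros u v Hu Huv Hv. simpl in Hv.
    apply Rle_trans with (RInt (fun t => hi * Rpower t (mu - 1)) u v).
    + apply RInt_le; [lra | apply Hi; simpl; auto | apply Hipow; simpl; auto |].
      intros x Hx. apply Hb. lra.
    + rewrite RInt_scal_R, RInt_Rpower by (try apply ex_RInt_Rpower; lra).
      pose proof (Hb v ltac:(lra)). pose proof (Rpower_gt_0 v (mu - 1)).
      assert (Hhi : 0 <= hi) by nra.
      apply Rmult_le_compat_l; [exact Hhi|].
      pose proof (Rpower_gt_0 u mu). pose proof (Rle_Rpower_l v z mu ltac:(lra) ltac:(lra)).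
      apply Rmult_le_compat_r; [left; apply Rinv_0_lt_compat|]; lra.
  - replace (cdf_pos f z) with l by (symmetry; apply imp_int_ab_eq; auto; lra).
    split; [|exact Hlb].
    apply (is_RInt_imp_le (fun t => lo * Rpower t (mu - 1)) f 0 (Finite z)); auto.
    + intros t Ht Htz. simpl in Htz. apply Hb. lra.
    + apply is_RInt_imp_scal; [|apply is_RInt_imp_Rpower; auto].
      apply ex_RInt_in_continuous. intros t Ht _. apply continuous_Rpower_base. auto.
Qed.

Lemma Rabs_mul_div_near (c x y y0 e eps : R) : 0 < c -> 0 < y0 -> 0 < e ->
  e <= y0 / 2 -> e <= eps * y0 / (8 * c) -> Rabs (x - y0) < e -> y0 - e <= y <= y0 + e ->
  Rabs (c * x / y - c) < eps.
Proof.
  intros Hc Hy0 He He1 He2 Hx Hy. apply Rabs_def2 in Hx.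
  assert (Heps : 0 < eps).
  { pose proof (Rinv_0_lt_compat (8 * c) ltac:(lra)). unfold Rdiv in He2.
    apply Rnot_le_lt. intro Hn. assert (eps * y0 <= 0) by nra.
    assert (eps * y0 * / (8 * c) <= 0) by nra. lra. }
  assert (Hce : c * (2 * e) <= eps * y0 / 4).
  { apply Rmult_le_reg_r with (/ c); [apply Rinv_0_lt_compat; lra|].
    replace (c * (2 * e) * / c) with (2 * e) by (field; lra).
    replace (eps * y0 / 4 * / c) with (2 * (eps * y0 / (8 * c))) by (field; lra). lra. }
  replace (c * x / y - c) with (c * (x - y) / y) by (field; lra).
  unfold Rdiv. rewrite !Rabs_mult, (Rabs_pos_eq c), (Rabs_pos_eq (/ y))
    by (try apply Rlt_le, Rinv_0_lt_compat; lra).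
  apply Rmult_lt_reg_r with y; [lra|]. rewrite Rmult_assoc, Rinv_l, Rmult_1_r by lra.
  assert (Hxy : Rabs (x - y) < 2 * e) by (apply Rabs_def1; lra).
  assert (c * Rabs (x - y) < c * (2 * e)) by (apply Rmult_lt_compat_l; lra).
  nra.
Qed.

Section Ratio.
Variables (k mu m xb : R) (fS : R -> R) (a A be H s0 : R).
Hypotheses (Hp : ksm_params k mu m xb) (Ha : 0 < a) (HA : 0 < A) (Hbe : 0 < be) (HH : 0 < H)
  (HfSc : forall s, 0 < s -> continuous fS s)
  (HfSb : forall s, 0 < s -> 0 <= fS s <= A * gamma_kernel a be s)
  (Hs0 : 0 < s0) (HfS0 : 0 < fS s0)
  (Hhb : forall x, 0 <= x -> ksm_factor k mu m xb x <= H).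

Let Hmu : 0 < mu. Proof. apply Hp. Qed.

Definition ratio_integrand z s := Rpower s mu * ksm_factor k mu m xb (z * s) * fS s.
Definition ratio_factor z := imp_int_0inf (ratio_integrand z).

Definition ratio_majorant s := H * A * gamma_kernel (mu + a) be s.

Lemma continuous_ratio_integrand z s : 0 < s -> continuous (ratio_integrand z) s.
Proof.
  intros Hs. apply continuous_Rmult; [apply continuous_Rmult | auto];
    [apply continuous_Rpower_base; auto|].
  apply (continuous_ext (fun s => ksm_factor k mu m xb (z * s + 0)));
    [intros; rewrite Rplus_0_r; auto|].
  apply continuous_comp_Rlin, continuous_ksm_factor, Hp.
Qed.

Lemma ex_RInt_in_ratio_integrand z : ex_RInt_in (ratio_integrand z) 0 p_infty.
Proof. apply ex_RInt_in_continuous. intros. apply continuous_ratio_integrand. auto. Qed.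

Lemma ratio_integrand_bounds z s : 0 <= z -> 0 < s -> 0 <= ratio_integrand z s <= ratio_majorant s.
Proof.
  intros Hz Hs. unfold ratio_integrand, ratio_majorant. pose proof (Rpower_gt_0 s mu).
  pose proof (ksm_factor_pos k mu m xb Hp (z * s) ltac:(nra)). pose proof (Hhb (z * s) ltac:(nra)).
  destruct (HfSb s Hs). split; [apply Rmult_le_pos; nra|].
  apply Rle_trans with (Rpower s mu * H * (A * gamma_kernel a be s)); [apply Rmult_le_compat; nra|].
  unfold gamma_kernel. replace (mu + a - 1) with (mu + (a - 1)) by ring.
  rewrite Rpower_plus. right; ring.
Qed.

Lemma ex_RInt_in_ratio_majorant : ex_RInt_in ratio_majorant 0 p_infty.
Proof.
  apply ex_RInt_in_continuous. intros.
  apply continuous_Rmult; [apply continuous_const | apply continuous_gamma_kernel; auto].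
Qed.

Lemma ratio_factor_is_RInt_imp z : 0 <= z ->
  is_RInt_imp (ratio_integrand z) 0 p_infty (ratio_factor z) /\ 0 <= ratio_factor z /\
  (forall u v, 0 < u -> u <= v -> RInt (ratio_integrand z) u v <= ratio_factor z).
Proof.
  intros Hz. destruct (RInt_gamma_kernel_bounded (mu + a) be ltac:(lra) Hbe) as [B HB].
  destruct (is_RInt_imp_bounded (ratio_integrand z) 0 p_infty (H * A * B))
    as [l [Hl [[Hl0 _] Hsup]]].
  - exact I.
  - apply ex_RInt_in_ratio_integrand.
  - intros t Ht _. apply ratio_integrand_bounds; auto.
  - intros u v Hu Huv _. apply Rle_trans with (RInt ratio_majorant u v).
    + apply RInt_le;
        [auto | apply ex_RInt_in_ratio_integrand | apply ex_RInt_in_ratio_majorant |]; simpl; auto.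
      intros; apply ratio_integrand_bounds; auto; lra.
    + unfold ratio_majorant. rewrite RInt_scal_R by (apply ex_RInt_in_gamma_kernel; simpl; auto).
      apply Rmult_le_compat_l; [nra | auto].
  - replace (ratio_factor z) with l
      by (symmetry; apply imp_int_0inf_eq; auto; apply ex_RInt_in_ratio_integrand).
    split; [auto | split; [auto | intros; apply Hsup; simpl; auto]].
Qed.

Lemma ratio_integrand_unif z0 p q : 0 <= z0 -> 0 < p -> p <= q -> forall e, 0 < e ->
  exists del, 0 < del /\ forall z, 0 <= z < z0 + 1 -> Rabs (z - z0) < del ->
  forall t, p <= t <= q -> Rabs (ratio_integrand z t - ratio_integrand z0 t) <= e.
Proof.
  intros Hz0 Hp0 Hpq e He.
  set (Mt := (Rpower p mu + Rpower q mu) * (A * (Rpower p (a - 1) + Rpower q (a - 1)))).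
  assert (HMt : 0 < Mt).
  { pose proof (Rpower_gt_0 p mu). pose proof (Rpower_gt_0 q mu).
    pose proof (Rpower_gt_0 p (a - 1)).
    pose proof (Rpower_gt_0 q (a - 1)). unfold Mt. apply Rmult_lt_0_compat; nra. }
  destruct (exists_small_mul Mt e) as [E [HE HEM]]; [lra | auto|].
  destruct (uniformly_continuous_on (ksm_factor k mu m xb) 0 ((z0 + 1) * q)) with (eps := E)
    as [dh [Hdh Hh]];
    [intros; apply continuous_ksm_factor, Hp | auto |].
  exists (dh / (q + 1)). split; [apply Rdiv_lt_0_compat; lra|].
  intros z Hz Hzd t Ht.
  assert (Hzt : Rabs (z * t - z0 * t) < dh).
  { replace (z * t - z0 * t) with ((z - z0) * t) by ring. rewrite Rabs_mult, (Rabs_pos_eq t) by lra.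
    pose proof (Rabs_pos (z - z0)).
    apply Rle_lt_trans with (Rabs (z - z0) * (q + 1)); [apply Rmult_le_compat_l; lra|].
    apply Rmult_lt_reg_r with (/ (q + 1)); [apply Rinv_0_lt_compat; lra|].
    rewrite Rmult_assoc, Rinv_r, Rmult_1_r by lra. auto. }
  assert (Hr1 : 0 <= z * t <= (z0 + 1) * q) by (split; [nra | apply Rmult_le_compat; lra]).
  assert (Hr0 : 0 <= z0 * t <= (z0 + 1) * q) by (split; [nra | apply Rmult_le_compat; lra]).
  specialize (Hh _ _ Hr1 Hr0 Hzt).
  unfold ratio_integrand.
  set (h := ksm_factor k mu m xb) in *.
  replace (Rpower t mu * h (z * t) * fS t - Rpower t mu * h (z0 * t) * fS t)
    with ((Rpower t mu * fS t) * (h (z * t) - h (z0 * t))) by ring.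
  pose proof (gamma_dominated_le_on fS a A be p q Hp0 HA Hbe HfSb t Ht).
  pose proof (Rpower_le_ends t p q mu ltac:(lra) ltac:(lra)). pose proof (Rpower_gt_0 t mu).
  rewrite Rabs_mult, Rabs_pos_eq by nra.
  eapply Rle_trans; [|exact HEM].
  apply Rmult_le_compat; [nra | apply Rabs_pos | unfold Mt; apply Rmult_le_compat; lra | lra].
Qed.

Lemma ratio_factor_continuous z0 : 0 <= z0 -> forall eps, 0 < eps -> exists del, 0 < del /\
  forall z, 0 <= z -> Rabs (z - z0) < del -> Rabs (ratio_factor z - ratio_factor z0) < eps.
Proof.
  intros Hz0 eps Heps.
  destruct (is_RInt_imp_gamma_kernel (mu + a) be ltac:(lra) Hbe) as [l Hl].
  set (Z := fun z => 0 <= z < z0 + 1).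
  destruct (is_RInt_imp_param_continuous ratio_integrand ratio_majorant 0 p_infty Z z0
      ratio_factor (H * A * l))
    with (eps := eps) as [del [Hdel Hc]]; auto.
  - unfold Z; lra.
  - intros; apply ex_RInt_in_ratio_integrand.
  - intros z Hz t Ht _. apply ratio_integrand_bounds; unfold Z in Hz; lra.
  - apply ex_RInt_in_ratio_majorant.
  - intros z t Hz Ht _. apply ratio_integrand_bounds; unfold Z in Hz; lra.
  - apply is_RInt_imp_scal; [apply ex_RInt_in_gamma_kernel | exact Hl].
  - intros z Hz. apply ratio_factor_is_RInt_imp. unfold Z in Hz. lra.
  - intros p q Hp0 Hpq _. apply ratio_integrand_unif; auto.
  - exists (Rmin del 1). pose proof (Rmin_l del 1). pose proof (Rmin_r del 1).
    split; [apply Rmin_glb_lt; lra|].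
    intros z Hz Hzd. apply Hc; apply Rabs_def2 in Hzd; [unfold Z; lra | apply Rabs_def1; lra].
Qed.

Lemma ratio_factor_0_pos : 0 < ratio_factor 0.
Proof.
  destruct (ratio_factor_is_RInt_imp 0 ltac:(lra)) as [_ [_ Hsup]].
  apply (is_RInt_imp_pos (ratio_integrand 0) 0 p_infty s0);
    [apply ex_RInt_in_ratio_integrand | auto | exact I | apply continuous_ratio_integrand; auto
    | |].
  - apply Rmult_lt_0_compat; auto. apply Rmult_lt_0_compat; [apply Rpower_gt_0|].
    apply ksm_factor_pos; auto; lra.
  - intros u v Hu Huv _. apply Hsup; auto.
Qed.

Lemma continuous_ratio_factor t : 0 < t -> continuous ratio_factor t.
Proof.
  intros Ht. apply continuous_of_eps_delta. intros eps Heps.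
  destruct (ratio_factor_continuous t ltac:(lra) eps Heps) as [del [Hd Hc]].
  exists (Rmin del t). pose proof (Rmin_l del t). pose proof (Rmin_r del t).
  split; [apply Rmin_glb_lt; lra|].
  intros y Hy. apply Hc; apply Rabs_def2 in Hy; [lra | apply Rabs_def1; lra].
Qed.

Lemma ratio_pdf_factor z :
  0 < z -> ratio_pdf (ksm_pdf k mu m xb) fS z = Rpower z (mu - 1) * ratio_factor z.
Proof.
  intros Hz. unfold ratio_pdf. destruct (Rlt_dec 0 z); [|lra].
  assert (Heq : forall s, 0 < s -> Rbar_lt s p_infty ->
    Rpower z (mu - 1) * ratio_integrand z s = s * ksm_pdf k mu m xb (z * s) * fS s).
  { intros s Hs _. rewrite ksm_pdf_factor by (auto; nra). unfold ratio_integrand.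
    rewrite <- Rpower_mult_distr, <- (Rpower_pred s mu) by lra. ring. }
  destruct (ratio_factor_is_RInt_imp z ltac:(lra)) as [HJ _].
  apply imp_int_0inf_eq.
  - apply (ex_RInt_in_ext _ _ 0 p_infty Heq). apply ex_RInt_in_continuous. intros.
    apply continuous_Rmult; [apply continuous_const | apply continuous_ratio_integrand; auto].
  - apply (is_RInt_imp_ext _ _ 0 p_infty _ Heq).
    apply is_RInt_imp_scal; [apply ex_RInt_in_ratio_integrand | exact HJ].
Qed.

Lemma continuous_ratio_pdf t : 0 < t -> continuous (ratio_pdf (ksm_pdf k mu m xb) fS) t.
Proof.
  intros Ht. apply (continuous_loc_ext _ (fun y => Rpower y (mu - 1) * ratio_factor y) t t Ht).
  - intros y Hy. apply Rabs_def2 in Hy. apply ratio_pdf_factor. lra.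
  - apply continuous_Rmult;
      [apply continuous_Rpower_base; auto | apply continuous_ratio_factor; auto].
Qed.

Lemma ratio_pdf_log_derivative_limit : forall eps, 0 < eps -> exists d, 0 < d /\
  forall z, 0 < z < d -> Rabs (z * ratio_pdf (ksm_pdf k mu m xb) fS z
                               / cdf_pos (ratio_pdf (ksm_pdf k mu m xb) fS) z - mu) < eps.
Proof.
  intros eps Heps. set (fg := ratio_pdf (ksm_pdf k mu m xb) fS).
  set (J0 := ratio_factor 0). pose proof ratio_factor_0_pos as HJ0. fold J0 in HJ0.
  pose proof (Rmin_l (J0 / 2) (eps * J0 / (8 * mu))).
  pose proof (Rmin_r (J0 / 2) (eps * J0 / (8 * mu))).
  set (e := Rmin (J0 / 2) (eps * J0 / (8 * mu))) in *.
  assert (He : 0 < e) by (unfold e; apply Rmin_glb_lt; [lra | apply Rdiv_lt_0_compat; nra]).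
  destruct (ratio_factor_continuous 0 ltac:(lra) e He) as [del [Hdel Hc]].
  exists del. split; auto. intros z Hz.
  assert (HJt : forall t, 0 < t <= z -> Rabs (ratio_factor t - J0) < e)
    by (intros t Ht; apply Hc; [lra | rewrite Rminus_0_r, Rabs_pos_eq; lra]).
  destruct (cdf_pos_Rpower_bounds fg mu z (J0 - e) (J0 + e)) as [HFlo HFhi]; [auto | lra | | |].
  - intros t Ht. apply continuous_ratio_pdf. lra.
  - intros t Ht. unfold fg. rewrite ratio_pdf_factor by lra.
    specialize (HJt t ltac:(lra)). apply Rabs_def2 in HJt. pose proof (Rpower_gt_0 t (mu - 1)).
    repeat split; nra.
  - fold fg. rewrite ratio_pdf_factor by lra.
    set (P := Rpower z mu) in *. assert (HP : 0 < P) by apply Rpower_gt_0.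
    assert (HF : 0 < cdf_pos fg z) by (eapply Rlt_le_trans; [|exact HFlo]; apply Rmult_lt_0_compat;
      [lra | apply Rdiv_lt_0_compat; lra]).
    replace (z * (Rpower z (mu - 1) * ratio_factor z) / cdf_pos fg z)
      with (mu * ratio_factor z / (cdf_pos fg z * mu / P)).
    2:{ unfold P. rewrite <- (Rpower_pred z mu) by lra. field.
        pose proof (Rpower_gt_0 z (mu - 1)). repeat split; nra. }
    apply (Rabs_mul_div_near mu (ratio_factor z) _ J0 e eps); auto; [apply HJt; lra|].
    split; apply Rmult_le_reg_r with (P / mu); try (apply Rdiv_lt_0_compat; lra);
      replace (cdf_pos fg z * mu / P * (P / mu)) with (cdf_pos fg z) by (field; lra); lra.
Qed.

End Ratio.

Theorem mainTheorem2 (N : nat) (k mu m xb : R) (kj muj mj xbj : nat -> R) :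
  (1 <= N)%nat ->
  0 <= k -> 0 < mu -> 0 < m -> 0 < xb ->
  (forall j, (j < N)%nat -> 0 <= kj j /\ 0 < muj j /\ 0 < mj j /\ 0 < xbj j) ->
  let f_gamma :=
    ratio_pdf (ksm_pdf k mu m xb)
              (sum_pdf (fun j => ksm_pdf (kj j) (muj j) (mj j) (xbj j)) (N - 1)) in
  let F_gamma := cdf_pos f_gamma in
  forall eps, 0 < eps -> exists d, 0 < d /\
    forall z, 0 < z < d -> Rabs (z * f_gamma z / F_gamma z - mu) < eps.
Proof.
  intros HN Hk Hmu Hm Hxb Hj f_gamma F_gamma.
  assert (Hp : ksm_params k mu m xb) by (repeat split; auto).
  destruct (sum_pdf_gamma_dominated (fun j => ksm_pdf (kj j) (muj j) (mj j) (xbj j)) (N - 1))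
    as [a [A [be [Ha [HA [Hbe [Hc [Hb [s0 [Hs0 Hpos]]]]]]]]]].
  { intros j Hjn. apply ksm_pdf_gamma_dominated. apply Hj. lia. }
  destruct (ksm_factor_bounded k mu m xb Hp) as [H [HH HfH]].
  exact (ratio_pdf_log_derivative_limit k mu m xb _ a A be H s0 Hp Ha HA Hbe HH Hc Hb Hs0 Hpos HfH).
Qed.
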